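(* In the Nakagami model with parameters $L_c>0$, $L_s>0$, the distortion exponent achievable by separate source and channel coding with rates scaling as $R_c=\frac{r_c}{2}\log_2\rho$, $R_s=\frac{r_s}{2}\log_2\rho$, $$\Delta_s(L_s,L_c):=\sup_{r_c>0,\ r_s\ge0}\ \lim_{\rho\to\infty}-\frac{\log ED_s\big(\tfrac{r_s}{2}\log_2\rho,\tfrac{r_c}{2}\log_2\rho\big)}{\log\rho},$$ equals $$\Delta_s(L_s,L_c)=\begin{cases}1-\dfrac{(1-L_s)^2}{L_c+1-L_s}&\text{if }L_s\le1,\\[2mm] \dfrac{L_s(2L_c+1)-L_c-1}{L_s(L_c+1)-1}&\text{if }L_s>1.\end{cases}$$
   Context: Nakagami model: for SNR $\rho>0$, the channel gain is $H=\rho H_0$ and the side-information gain is $\Gamma=\rho\Gamma_0$, where $H_0,\Gamma_0$ are independent, $H_0$ is Gamma distributed with shape $L_c$ and scale $1/L_c$, and $\Gamma_0$ is Gamma distributed with shape $L_s$ and scale $1/L_s$ (Gamma$(L,\theta)$ density $\frac{1}{\theta^L\Gamma(L)}x^{L-1}e^{-x/\theta}$, $x\ge0$). Logarithms base 2 unless ratios of logs. Define $D_d(R,\gamma)=(\gamma+2^{2R})^{-1}$. For $R_s\ge0,R_c>0$, the SSCC outage set is $\mathcal O_s=\{(h,\gamma): R_c\ge\tfrac12\log_2(1+h)\}\cup\{(h,\gamma): R_c\le \tfrac12\log_2(1+\tfrac{2^{2(R_s+R_c)}-1}{1+\gamma})\}$ and $ED_s(R_s,R_c)=\mathrm E[D_d(R_s+R_c,\Gamma)\mathbf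 1\{(H,\Gamma)\notin\mathcal O_s\}]+\mathrm E[D_d(0,\Gamma)\mathbf 1\{(H,\Gamma)\in\mathcal O_s\}]$ (a function of $\rho$ through $H,\Gamma$). *)

From Stdlib Require Import Reals Lra ClassicalEpsilon.
Open Scope R_scope.

Definition log2 (x : R) : R := ln x / ln 2.

Definition IsInt0inf (f : R -> R) (I : R) : Prop :=
  (forall a b : R, 0 < a -> a <= b -> exists pr : Riemann_integrable f a b, True) /\
  (forall eps : R, 0 < eps -> exists delta M : R, 0 < delta /\
     forall (a b : R) (pr : Riemann_integrable f a b),
       0 < a -> a < delta -> M < b -> Rabs (RiemannInt pr - I) < eps).

(* The value of the improper integral (chosen by description; unique when it exists). *)
Definition Int0inf (f : R -> R) : R :=
  epsilon (inhabits 0) (fun I => IsInt0inf f I).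

Definition GammaFn (L : R) : R :=
  Int0inf (fun x => Rpower x (L - 1) * exp (- x)).

Definition gamma_pdf (L theta : R) (x : R) : R :=
  / (Rpower theta L * GammaFn L) * Rpower x (L - 1) * exp (- x / theta).

Definition Dd (Rr g : R) : R := / (g + Rpower 2 (2 * Rr)).

Definition in_Os (Rs Rc h g : R) : bool :=
  if Rle_dec (/2 * log2 (1 + h)) Rc then true
  else if Rle_dec Rc (/2 * log2 (1 + (Rpower 2 (2 * (Rs + Rc)) - 1) / (1 + g)))
       then true else false.

Definition dist_s (Rs Rc h g : R) : R :=
  if in_Os Rs Rc h g then Dd 0 g else Dd (Rs + Rc) g.

(* ED_s(Rs,Rc) at SNR rho in the Nakagami model:
   E[ dist_s(rho H0, rho Gamma0) ], H0 ~ Gamma(Lc, 1/Lc), Gamma0 ~ Gamma(Ls, 1/Ls)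
   independent; written as an iterated integral over (0,oo)^2 (the integrand is
   nonnegative and bounded, so by Tonelli this is the expectation). *)
Definition EDs (Ls Lc rho Rs Rc : R) : R :=
  Int0inf (fun g0 =>
    Int0inf (fun h0 => dist_s Rs Rc (rho * h0) (rho * g0) * gamma_pdf Lc (/ Lc) h0)
    * gamma_pdf Ls (/ Ls) g0).

Definition lim_infty (f : R -> R) (l : R) : Prop :=
  forall eps : R, 0 < eps -> exists M : R, forall x : R, M < x -> Rabs (f x - l) < eps.

Definition exp_ratio (Ls Lc rs rc : R) (rho : R) : R :=
  - ln (EDs Ls Lc rho (rs / 2 * log2 rho) (rc / 2 * log2 rho)) / ln rho.

Definition Delta_formula (Ls Lc : R) : R :=
  if Rle_dec Ls 1 then 1 - (1 - Ls) ^ 2 / (Lc + 1 - Ls)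
  else (Ls * (2 * Lc + 1) - Lc - 1) / (Ls * (Lc + 1) - 1).

(* For rho > 1 the
   outage event splits into "channel outage" (1 + rho h <= rho^rc) and
   "side-information outage" (gamma0 <= gamma_crit), so integrating out the
   channel gain reduces ED_s to a one-dimensional integral against the
   Gamma(Ls) density of the side information; the remaining weight involves
   the probability P_out(rho) ~ rho^(-Lc max(1-rc,0)) of channel outage.
   Splitting this integral into the regimes gamma0 ~ rho^(g-1) gives
       c rho^(-d) <= ED_s <= C (1 + ln rho) rho^(-d)   for rho large,
   with an explicit piecewise-linear exponent d = [exponent Ls Lc rs rc],
   the minimum of (at most) three linear expressions.  Hence the limit in
   the theorem exists and equals d, and a short linear-programming argument
   shows sup_{rs >= 0, rc > 0} d = Delta_formula Ls Lc, attained. *)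

From Stdlib Require Import Reals Lra Psatz ClassicalEpsilon Classical.
From Coquelicot Require Import Coquelicot.
Open Scope R_scope.

(** * Improper integrals over (0, +oo) of nonnegative functions *)

(* A function is [tame] when it is nonnegative and locally integrable on
   (0,oo) with uniformly bounded integrals over compact subintervals; for
   such functions [Int0inf] is the supremum of those integrals and behaves
   like a positive linear functional. *)
Definition locally_integrable (f : R -> R) : Prop :=
  forall a b, 0 < a -> a <= b -> ex_RInt f a b.
Definition nonneg_on_pos (f : R -> R) : Prop := forall x, 0 < x -> 0 <= f x.
Definition partial_integrals_le (f : R -> R) (B : R) : Prop :=
  forall a b, 0 < a -> a <= b -> RInt f a b <= B.
Definition tame (f : R -> R) : Prop :=
  locally_integrable f /\ nonneg_on_pos f /\ exists B, partial_integrals_le f B.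

(* Coquelicot's linearity lemmas, specialised to real-valued functions so
   that they match [c * f x] and [f x + g x] syntactically. *)
Lemma RInt_scal_R (f : R -> R) a b c :
  ex_RInt f a b -> RInt (fun x => c * f x) a b = c * RInt f a b.
Proof. intros; apply (RInt_scal f a b c); auto. Qed.
Lemma RInt_plus_R (f g : R -> R) a b : ex_RInt f a b -> ex_RInt g a b ->
  RInt (fun x => f x + g x) a b = RInt f a b + RInt g a b.
Proof. intros; apply (RInt_plus f g a b); auto. Qed.
Lemma ex_RInt_scal_R (f : R -> R) a b c : ex_RInt f a b -> ex_RInt (fun x => c * f x) a b.
Proof. intros; apply (ex_RInt_scal f a b c); auto. Qed.
Lemma ex_RInt_plus_R (f g : R -> R) a b :
  ex_RInt f a b -> ex_RInt g a b -> ex_RInt (fun x => f x + g x) a b.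
Proof. intros; apply (ex_RInt_plus f g a b); auto. Qed.

Lemma IsInt0inf_unique f I J : IsInt0inf f I -> IsInt0inf f J -> I = J.
Proof.
  intros [Hint HI] [_ HJ].
  destruct (Req_dec I J) as [E|NE]; auto. exfalso.
  set (eps := Rabs (I - J) / 2).
  assert (Hep : 0 < eps). { unfold eps. assert (0 < Rabs (I-J)) by (apply Rabs_pos_lt; lra). lra. }
  destruct (HI eps Hep) as (d1 & M1 & Hd1 & K1).
  destruct (HJ eps Hep) as (d2 & M2 & Hd2 & K2).
  set (a := Rmin d1 d2 / 2). set (b := Rmax (Rmax M1 M2) a + 1).
  assert (0 < Rmin d1 d2) by (apply Rmin_glb_lt; auto).
  pose proof (Rmin_l d1 d2). pose proof (Rmin_r d1 d2).
  pose proof (Rmax_l (Rmax M1 M2) a). pose proof (Rmax_r (Rmax M1 M2) a).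
  pose proof (Rmax_l M1 M2). pose proof (Rmax_r M1 M2).
  assert (Ha : 0 < a) by (unfold a; lra).
  destruct (Hint a b Ha ltac:(unfold b; lra)) as [pr _].
  specialize (K1 a b pr Ha ltac:(unfold a; lra) ltac:(unfold b; lra)).
  specialize (K2 a b pr Ha ltac:(unfold a; lra) ltac:(unfold b; lra)).
  assert (Rabs (I - J) < 2 * eps).
  { replace (I - J) with (-(RiemannInt pr - I) + (RiemannInt pr - J)) by ring.
    eapply Rle_lt_trans. apply Rabs_triang. rewrite Rabs_Ropp. lra. }
  unfold eps in *. lra.
Qed.

Lemma Int0inf_spec f I : IsInt0inf f I -> Int0inf f = I.
Proof.
  intros H. apply (IsInt0inf_unique f); [|exact H].
  apply (epsilon_spec (inhabits 0) (fun I => IsInt0inf f I)). exists I; exact H.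
Qed.

Lemma RInt_le_superinterval f a b a0 b0 : locally_integrable f -> nonneg_on_pos f ->
  0 < a -> a <= a0 -> a0 <= b0 -> b0 <= b -> RInt f a0 b0 <= RInt f a b.
Proof.
  intros Hl Hn Ha H1 H2 H3.
  assert (E1 : RInt f a a0 + RInt f a0 b = RInt f a b).
  { apply (RInt_Chasles f a a0 b); apply Hl; lra. }
  assert (E2 : RInt f a0 b0 + RInt f b0 b = RInt f a0 b).
  { apply (RInt_Chasles f a0 b0 b); apply Hl; lra. }
  assert (0 <= RInt f a a0) by (apply RInt_ge_0; [lra | apply Hl; lra | intros; apply Hn; lra]).
  assert (0 <= RInt f b0 b) by (apply RInt_ge_0; [lra | apply Hl; lra | intros; apply Hn; lra]).
  lra.
Qed.

Definition partial_integrals (f : R -> R) (y : R) : Prop :=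
  exists a b, 0 < a /\ a <= b /\ y = RInt f a b.

Lemma tame_IsInt0inf f : tame f -> exists S, IsInt0inf f S /\ is_lub (partial_integrals f) S.
Proof.
  intros (Hl & Hn & B & HB).
  assert (Hbd : bound (partial_integrals f)) by (exists B; intros y (a & b & Ha & Hab & ->); auto).
  assert (Hne : exists y, partial_integrals f y) by (exists (RInt f 1 1), 1, 1; split; lra).
  destruct (completeness _ Hbd Hne) as [S HS].
  exists S. split; auto. split.
  - intros a b Ha Hab. exists (ex_RInt_Reals_0 _ _ _ (Hl a b Ha Hab)). auto.
  - intros eps Heps.
    assert (exists y, partial_integrals f y /\ S - eps < y) as (y & (a0 & b0 & Ha0 & Hab0 & ->) & Hy).
    { apply NNPP. intros Hno. destruct HS as [_ HS2].
      assert (S <= S - eps) by (apply HS2; intros y Hy; apply Rnot_lt_le; intro; apply Hno; exists y; auto).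
      lra. }
    exists a0, b0. split; auto. intros a b pr Ha Hlt Hgt.
    rewrite <- RInt_Reals.
    assert (RInt f a0 b0 <= RInt f a b) by (apply RInt_le_superinterval; auto; lra).
    assert (RInt f a b <= S) by (apply (proj1 HS); exists a, b; repeat split; auto; lra).
    rewrite Rabs_left1; lra.
Qed.

Lemma Int0inf_le_bound f B : tame f -> partial_integrals_le f B -> Int0inf f <= B.
Proof.
  intros HG HB. destruct (tame_IsInt0inf f HG) as (S & HS & _ & Hl).
  rewrite (Int0inf_spec _ _ HS). apply Hl. intros y (a & b & Ha & Hab & ->). auto.
Qed.

Lemma RInt_le_Int0inf f a b : tame f -> 0 < a -> a <= b -> RInt f a b <= Int0inf f.
Proof.
  intros HG Ha Hab. destruct (tame_IsInt0inf f HG) as (S & HS & Hl & _).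
  rewrite (Int0inf_spec _ _ HS). apply Hl. exists a, b; auto.
Qed.

Lemma Int0inf_approx f eps : tame f -> 0 < eps ->
  exists a b, 0 < a /\ a <= b /\ Int0inf f - eps < RInt f a b.
Proof.
  intros HG Heps. destruct (tame_IsInt0inf f HG) as (S & HS & _ & HL).
  rewrite (Int0inf_spec _ _ HS). apply NNPP. intros Hno.
  assert (S <= S - eps).
  { apply HL. intros y (a & b & Ha & Hab & ->). apply Rnot_lt_le. intro. apply Hno. exists a, b; auto. }
  lra.
Qed.

Lemma Int0inf_nonneg f : tame f -> 0 <= Int0inf f.
Proof.
  intros HG. eapply Rle_trans; [|apply (RInt_le_Int0inf f 1 1); auto; lra].
  rewrite RInt_point. unfold zero; simpl. lra.
Qed.

Lemma Int0inf_le f g : tame f -> tame g -> (forall x, 0 < x -> f x <= g x) ->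
  Int0inf f <= Int0inf g.
Proof.
  intros Hf Hg Hle. apply Int0inf_le_bound; auto. intros a b Ha Hab.
  eapply Rle_trans; [|apply (RInt_le_Int0inf g a b); auto].
  apply RInt_le; auto; [apply Hf | apply Hg | intros; apply Hle]; auto; lra.
Qed.

Lemma tame_ext f g : tame f -> (forall x, 0 < x -> f x = g x) -> tame g.
Proof.
  intros (Hl & Hn & B & HB) E. split; [|split].
  - intros a b Ha Hab. apply (ex_RInt_ext f); auto.
    intros x Hx. rewrite Rmin_left in Hx by lra. apply E; lra.
  - intros x Hx. rewrite <- E; auto.
  - exists B. intros a b Ha Hab. rewrite <- (RInt_ext f); auto.
    intros x Hx. rewrite Rmin_left in Hx by lra. apply E; lra.
Qed.

Lemma Int0inf_ext f g : tame f -> (forall x, 0 < x -> f x = g x) -> Int0inf f = Int0inf g.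
Proof.
  intros Hf E. assert (Hg := tame_ext f g Hf E).
  apply Rle_antisym; apply Int0inf_le; auto; intros; rewrite E; auto; lra.
Qed.

Lemma tame_scal c f : 0 <= c -> tame f -> tame (fun x => c * f x).
Proof.
  intros Hc (Hl & Hn & B & HB). split; [|split].
  - intros a b Ha Hab. apply ex_RInt_scal_R. auto.
  - intros x Hx. apply Rmult_le_pos; auto.
  - exists (c * B). intros a b Ha Hab. rewrite RInt_scal_R by auto.
    apply Rmult_le_compat_l; auto.
Qed.

Lemma Int0inf_scal c f : 0 < c -> tame f -> Int0inf (fun x => c * f x) = c * Int0inf f.
Proof.
  intros Hc Hf. assert (Hg := tame_scal c f ltac:(lra) Hf).
  apply Rle_antisym.
  - apply Int0inf_le_bound; auto. intros a b Ha Hab. rewrite RInt_scal_R by (apply Hf; auto).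
    apply Rmult_le_compat_l; [lra|]. apply RInt_le_Int0inf; auto.
  - rewrite Rmult_comm. apply Rle_div_r; [lra|].
    apply Int0inf_le_bound; auto. intros a b Ha Hab. apply Rle_div_r; [lra|].
    rewrite Rmult_comm, <- RInt_scal_R by (apply Hf; auto).
    apply (RInt_le_Int0inf (fun x => c * f x)); auto.
Qed.

Lemma tame_plus f g : tame f -> tame g -> tame (fun x => f x + g x).
Proof.
  intros (Hl & Hn & B & HB) (Hl' & Hn' & B' & HB'). split; [|split].
  - intros a b Ha Hab. apply ex_RInt_plus_R; auto.
  - intros x Hx. specialize (Hn x Hx); specialize (Hn' x Hx). lra.
  - exists (B + B'). intros a b Ha Hab.
    rewrite RInt_plus_R by auto. specialize (HB a b Ha Hab); specialize (HB' a b Ha Hab). lra.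
Qed.

Lemma Int0inf_plus f g : tame f -> tame g ->
  Int0inf (fun x => f x + g x) = Int0inf f + Int0inf g.
Proof.
  intros Hf Hg. assert (Hfg := tame_plus f g Hf Hg).
  assert (RI : forall a b, 0 < a -> a <= b -> RInt (fun x => f x + g x) a b = RInt f a b + RInt g a b).
  { intros a b Ha Hab. apply RInt_plus_R; [apply Hf | apply Hg]; auto. }
  apply Rle_antisym.
  - apply Int0inf_le_bound; auto. intros a b Ha Hab. rewrite RI by auto.
    pose proof (RInt_le_Int0inf f a b Hf Ha Hab). pose proof (RInt_le_Int0inf g a b Hg Ha Hab). lra.
  - apply Rnot_lt_le. intro Hlt.
    set (eps := (Int0inf f + Int0inf g - Int0inf (fun x => f x + g x)) / 2).
    assert (Hep : 0 < eps) by (unfold eps; lra).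
    destruct (Int0inf_approx f eps Hf Hep) as (a1 & b1 & Ha1 & Hab1 & K1).
    destruct (Int0inf_approx g eps Hg Hep) as (a2 & b2 & Ha2 & Hab2 & K2).
    set (a := Rmin a1 a2). set (b := Rmax b1 b2).
    assert (Ha : 0 < a) by (unfold a; apply Rmin_glb_lt; auto).
    assert (a <= a1 /\ a <= a2 /\ b1 <= b /\ b2 <= b)
      by (unfold a, b; repeat split; [apply Rmin_l | apply Rmin_r | apply Rmax_l | apply Rmax_r]).
    assert (RInt f a1 b1 <= RInt f a b) by (apply RInt_le_superinterval; try apply Hf; lra).
    assert (RInt g a2 b2 <= RInt g a b) by (apply RInt_le_superinterval; try apply Hg; lra).
    pose proof (RInt_le_Int0inf _ a b Hfg Ha ltac:(lra)) as Hsum. rewrite RI in Hsum by lra.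
    unfold eps in *. lra.
Qed.

Lemma exp_le x y : x <= y -> exp x <= exp y.
Proof. intros [H|H]; [left; apply exp_increasing; auto | subst; lra]. Qed.

Lemma ln_pos x : 1 < x -> 0 < ln x.
Proof. intros; rewrite <- ln_1; apply ln_increasing; lra. Qed.

Lemma ln2_pos : 0 < ln 2.
Proof. apply ln_pos; lra. Qed.

(* ln y <= y/m + ln m - 1: the tangent-line bound for ln at m. *)
Lemma ln_le_scaled y m : 0 < y -> 0 < m -> ln y <= y / m + ln m - 1.
Proof.
  intros Hy Hm. assert (Hym : 0 < y / m) by (apply Rdiv_lt_0_compat; auto).
  pose proof (exp_ineq1_le (ln (y / m))) as H. rewrite exp_ln in H by auto.
  unfold Rdiv in *. rewrite ln_mult, ln_Rinv in H; auto. lra. apply Rinv_0_lt_compat; auto.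
Qed.

Lemma Rpower_pos x c : 0 < Rpower x c.
Proof. apply exp_pos. Qed.

Lemma Rpower_one_l c : Rpower 1 c = 1.
Proof. unfold Rpower. rewrite ln_1, Rmult_0_r, exp_0. auto. Qed.

Lemma Rpower_le_1 x c : 1 <= x -> c <= 0 -> Rpower x c <= 1.
Proof. intros. rewrite <- (Rpower_O x) by lra. apply Rle_Rpower; auto. Qed.

Lemma Rpower_ge_1 x c : 1 <= x -> 0 <= c -> 1 <= Rpower x c.
Proof. intros. rewrite <- (Rpower_one_l c). apply Rle_Rpower_l; auto; lra. Qed.

Lemma Rpower_le_base_nonpos a b c : c <= 0 -> 0 < a <= b -> Rpower b c <= Rpower a c.
Proof.
  intros Hc [Ha Hab]. unfold Rpower. apply exp_le.
  assert (ln a <= ln b) by (apply ln_le; lra). nra.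
Qed.

Lemma Rpower_pred y c : 0 < y -> Rpower y (c - 1) = Rpower y c / y.
Proof.
  intros Hy. unfold Rpower. replace ((c - 1) * ln y) with (c * ln y + - ln y) by ring.
  rewrite exp_plus, exp_Ropp, exp_ln by auto. reflexivity.
Qed.

Lemma Rpower_succ_pred v L : 0 < v -> Rpower v L = v * Rpower v (L - 1).
Proof. intros. rewrite Rpower_pred by auto. field. lra. Qed.

Lemma continuous_of_derive (f : R -> R) x : ex_derive f x -> continuous f x.
Proof. intros H. exact (@ex_derive_continuous R_AbsRing R_NormedModule f x H). Qed.

Lemma continuous_Rpower c y : 0 < y -> continuous (fun y => Rpower y c) y.
Proof. intros Hy. apply continuous_of_derive. unfold Rpower. auto_derive. auto. Qed.

Lemma ex_RInt_continuous_pos (f : R -> R) a b : 0 < a -> a <= b ->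
  (forall y, 0 < y -> continuous f y) -> ex_RInt f a b.
Proof.
  intros. apply (@ex_RInt_continuous R_CompleteNormedModule).
  intros z Hz. rewrite Rmin_left in Hz by lra. apply H1. lra.
Qed.

Lemma locally_integrable_continuous (f : R -> R) :
  (forall y, 0 < y -> continuous f y) -> locally_integrable f.
Proof. intros C a b Ha Hab. apply ex_RInt_continuous_pos; auto. Qed.

Lemma locally_integrable_piecewise (f f1 f2 : R -> R) c :
  (forall y, 0 < y -> continuous f1 y) -> (forall y, 0 < y -> continuous f2 y) ->
  (forall y, 0 < y -> y < c -> f y = f1 y) -> (forall y, 0 < y -> c < y -> f y = f2 y) ->
  locally_integrable f.
Proof.
  intros C1 C2 E1 E2.
  assert (P1 : forall a b, 0 < a -> a <= b -> b <= c -> ex_RInt f a b).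
  { intros a b Ha Hab Hbc. apply (ex_RInt_ext f1); [|apply ex_RInt_continuous_pos; auto].
    intros x Hx. rewrite Rmin_left, Rmax_right in Hx by lra. symmetry; apply E1; lra. }
  assert (P2 : forall a b, 0 < a -> c <= a -> a <= b -> ex_RInt f a b).
  { intros a b Ha Hca Hab. apply (ex_RInt_ext f2); [|apply ex_RInt_continuous_pos; auto].
    intros x Hx. rewrite Rmin_left, Rmax_right in Hx by lra. symmetry; apply E2; lra. }
  intros a b Ha Hab.
  destruct (Rle_dec b c); [apply P1; auto|]. destruct (Rle_dec c a); [apply P2; auto|].
  apply (ex_RInt_Chasles f a c b); [apply P1 | apply P2]; lra.
Qed.

Lemma RInt_Rpower_pred L a b : 0 < a -> a <= b -> L <> 0 ->
  RInt (fun y => Rpower y (L - 1)) a b = (Rpower b L - Rpower a L) / L.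
Proof.
  intros Ha Hab HL. apply is_RInt_unique.
  replace ((Rpower b L - Rpower a L) / L) with (minus (Rpower b L / L) (Rpower a L / L))
    by (unfold minus, plus, opp; simpl; field; auto).
  apply (is_RInt_derive (fun y => Rpower y L / L)).
  - intros x Hx. rewrite Rmin_left, Rmax_right in Hx by lra.
    rewrite Rpower_pred by lra. unfold Rpower. auto_derive; [lra|]. field. split; lra.
  - intros x Hx. rewrite Rmin_left, Rmax_right in Hx by lra. apply continuous_Rpower. lra.
Qed.

Lemma RInt_inv a b : 0 < a -> a <= b -> RInt (fun y => / y) a b = ln b - ln a.
Proof.
  intros Ha Hab. apply is_RInt_unique.
  replace (ln b - ln a) with (minus (ln b) (ln a)) by (unfold minus, plus, opp; simpl; ring).
  apply (is_RInt_derive ln).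
  - intros x Hx. rewrite Rmin_left, Rmax_right in Hx by lra. apply is_derive_ln. lra.
  - intros x Hx. rewrite Rmin_left, Rmax_right in Hx by lra. apply continuous_of_derive. auto_derive. lra.
Qed.

Lemma RInt_inv_sq a b : 0 < a -> a <= b -> RInt (fun y => / (y * y)) a b = / a - / b.
Proof.
  intros Ha Hab. apply is_RInt_unique.
  replace (/ a - / b) with (minus (- / b) (- / a)) by (unfold minus, plus, opp; simpl; ring).
  apply (is_RInt_derive (fun y => - / y)).
  - intros x Hx. rewrite Rmin_left, Rmax_right in Hx by lra. auto_derive. lra. field. lra.
  - intros x Hx. rewrite Rmin_left, Rmax_right in Hx by lra. apply continuous_of_derive. auto_derive. nra.
Qed.

Lemma ex_RInt_inv a b : 0 < a -> a <= b -> ex_RInt (fun y => / y) a b.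
Proof. intros. apply ex_RInt_continuous_pos; auto. intros. apply continuous_of_derive. auto_derive. lra. Qed.

Lemma ex_RInt_inv_sq a b : 0 < a -> a <= b -> ex_RInt (fun y => / (y * y)) a b.
Proof. intros. apply ex_RInt_continuous_pos; auto. intros. apply continuous_of_derive. auto_derive. nra. Qed.

Lemma ex_RInt_Rpower c a b : 0 < a -> a <= b -> ex_RInt (fun y => Rpower y c) a b.
Proof. intros. apply ex_RInt_continuous_pos; auto. intros. apply continuous_Rpower; auto. Qed.

Lemma Int0inf_ge_box f x y m : tame f -> 0 < x -> x <= y ->
  (forall z, x < z < y -> m <= f z) -> m * (y - x) <= Int0inf f.
Proof.
  intros HG Hx Hxy Hm. eapply Rle_trans; [|apply (RInt_le_Int0inf f x y); auto].
  replace (m * (y - x)) with (RInt (fun _ => m) x y)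
    by (rewrite RInt_const; unfold scal; simpl; unfold mult; simpl; ring).
  apply RInt_le; auto. apply ex_RInt_const. apply HG; auto.
Qed.

Lemma RInt_three_regimes f L x K S S2 : locally_integrable f -> nonneg_on_pos f ->
  0 < L -> 0 < x <= 1 -> 0 <= K -> 0 <= S -> 0 <= S2 ->
  (forall y, 0 < y < x -> f y <= K * Rpower y (L - 1)) ->
  (forall y, x < y < 1 -> y * f y <= S) ->
  (forall y, 1 < y -> f y <= S2 / (y * y)) ->
  partial_integrals_le f (K * Rpower x L / L + S * (- ln x) + S2).
Proof.
  intros Hl Hn HL Hx HK HS HS2 H1 H2 H3 a b Ha Hab.
  set (a' := Rmin a x). set (b' := Rmax b 1).
  assert (Ha' : 0 < a') by (unfold a'; apply Rmin_glb_lt; lra).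
  assert (a' <= a /\ a' <= x /\ b <= b' /\ 1 <= b')
    by (unfold a', b'; repeat split; [apply Rmin_l | apply Rmin_r | apply Rmax_l | apply Rmax_r]).
  eapply Rle_trans; [apply (RInt_le_superinterval f a' b' a b); auto; lra|].
  rewrite <- (RInt_Chasles f a' x b') by (apply Hl; lra).
  rewrite <- (RInt_Chasles f x 1 b') by (apply Hl; lra).
  unfold plus; simpl.
  assert (I1 : RInt f a' x <= K * Rpower x L / L).
  { eapply Rle_trans.
    { apply (RInt_le f (fun y => K * Rpower y (L - 1)) a' x); [lra | apply Hl; lra | |].
      - apply ex_RInt_scal_R, ex_RInt_Rpower; lra.
      - intros y Hy. apply H1. lra. }
    rewrite RInt_scal_R, RInt_Rpower_pred by (try apply ex_RInt_Rpower; lra).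
    pose proof (Rpower_pos a' L).
    unfold Rdiv. rewrite Rmult_assoc. apply Rmult_le_compat_l; auto.
    apply Rmult_le_compat_r; [left; apply Rinv_0_lt_compat|]; lra. }
  assert (I2 : RInt f x 1 <= S * - ln x).
  { eapply Rle_trans.
    { apply (RInt_le f (fun y => S * / y) x 1); [lra | apply Hl; lra | |].
      - apply ex_RInt_scal_R, ex_RInt_inv; lra.
      - intros y Hy. apply (Rmult_le_reg_l y); [lra|].
        replace (y * (S * / y)) with S by (field; lra). apply H2. lra. }
    rewrite RInt_scal_R, RInt_inv, ln_1 by (try apply ex_RInt_inv; lra). lra. }
  assert (I3 : RInt f 1 b' <= S2).
  { eapply Rle_trans.
    { apply (RInt_le f (fun y => S2 * / (y * y)) 1 b'); [lra | apply Hl; lra | |].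
      - apply ex_RInt_scal_R, ex_RInt_inv_sq; lra.
      - intros y Hy. apply H3. lra. }
    rewrite RInt_scal_R, RInt_inv_sq, Rinv_1 by (try apply ex_RInt_inv_sq; lra).
    assert (0 < / b') by (apply Rinv_0_lt_compat; lra). nra. }
  lra.
Qed.

Lemma Int0inf_three_regimes f L x K S S2 : tame f -> 0 < L -> 0 < x <= 1 ->
  0 <= K -> 0 <= S -> 0 <= S2 ->
  (forall y, 0 < y < x -> f y <= K * Rpower y (L - 1)) ->
  (forall y, x < y < 1 -> y * f y <= S) ->
  (forall y, 1 < y -> f y <= S2 / (y * y)) ->
  Int0inf f <= K * Rpower x L / L + S * (- ln x) + S2.
Proof.
  intros HG; intros. apply Int0inf_le_bound; auto.
  apply RInt_three_regimes; try apply HG; auto.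
Qed.

Lemma tame_of_power_bounds f L K S2 : locally_integrable f -> nonneg_on_pos f ->
  0 < L -> 0 <= K -> 0 <= S2 ->
  (forall y, 0 < y < 1 -> f y <= K * Rpower y (L - 1)) ->
  (forall y, 1 < y -> f y <= S2 / (y * y)) -> tame f.
Proof.
  intros Hl Hn HL HK HS2 H1 H3. split; [auto | split; [auto|]].
  eexists. apply (RInt_three_regimes f L 1 K 0 S2); auto; intros; lra.
Qed.

Lemma power_exp_tail c k : 0 < k ->
  exists K, 0 < K /\ forall y, 1 <= y -> Rpower y c * exp (- (k * y)) <= K / (y * y).
Proof.
  intros Hk. set (m := (Rabs c + 2) / k). pose proof (Rabs_pos c).
  assert (Hm : 0 < m) by (unfold m; apply Rdiv_lt_0_compat; lra).
  exists (exp ((Rabs c + 2) * (ln m - 1))). split; [apply exp_pos|].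
  intros y Hy. assert (Hy0 : 0 < y) by lra.
  assert (E : y * y = exp (2 * ln y))
    by (replace (2 * ln y) with (ln y + ln y) by ring; rewrite exp_plus, exp_ln; auto).
  unfold Rdiv. rewrite E, <- exp_Ropp. unfold Rpower. rewrite <- !exp_plus.
  apply exp_le.
  pose proof (ln_le_scaled y m Hy0 Hm).
  assert (0 <= ln y) by (rewrite <- ln_1; apply ln_le; lra).
  assert (c * ln y <= Rabs c * ln y) by (apply Rmult_le_compat_r; auto; apply Rle_abs).
  assert ((Rabs c + 2) * ln y <= (Rabs c + 2) * (y / m + ln m - 1)) by (apply Rmult_le_compat_l; lra).
  assert ((Rabs c + 2) * (y / m) = k * y) by (unfold m; field; lra).
  nra.
Qed.

(** * The Gamma function and the Nakagami densities *)

Definition gamma_integrand (L : R) (x : R) : R := Rpower x (L - 1) * exp (- x).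

Lemma tame_gamma_integrand L : 0 < L -> tame (gamma_integrand L).
Proof.
  intros HL. destruct (power_exp_tail (L - 1) 1 ltac:(lra)) as (K & HK & HKb).
  apply (tame_of_power_bounds _ L 1 K); auto; try lra; unfold gamma_integrand.
  - apply locally_integrable_continuous. intros y Hy.
    apply continuous_of_derive. unfold Rpower. auto_derive. auto.
  - intros y Hy. apply Rmult_le_pos; left; [apply Rpower_pos | apply exp_pos].
  - intros y Hy. rewrite Rmult_1_l. rewrite <- (Rmult_1_r (Rpower y (L - 1))) at 2.
    apply Rmult_le_compat_l; [left; apply Rpower_pos|].
    rewrite <- exp_0. apply exp_le. lra.
  - intros y Hy. replace (- y) with (- (1 * y)) by ring. apply HKb. lra.
Qed.

Lemma GammaFn_pos L : 0 < L -> 0 < GammaFn L.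
Proof.
  intros HL. unfold GammaFn. fold (gamma_integrand L).
  set (m := exp (- Rabs (L - 1) * ln 2 - 2)). pose proof (exp_pos (- Rabs (L - 1) * ln 2 - 2)).
  eapply Rlt_le_trans; [|apply (Int0inf_ge_box _ 1 2 m (tame_gamma_integrand L HL)); try lra]; [unfold m; lra|].
  intros z Hz. unfold gamma_integrand, m, Rpower. rewrite <- exp_plus. apply exp_le.
  assert (0 <= ln z) by (rewrite <- ln_1; apply ln_le; lra).
  assert (ln z <= ln 2) by (apply ln_le; lra). pose proof ln_lt_2.
  assert (- Rabs (L - 1) * ln 2 <= (L - 1) * ln z).
  { destruct (Rle_dec 0 (L - 1)); [rewrite Rabs_right by lra | rewrite Rabs_left by lra]; nra. }
  lra.
Qed.

Definition dens (L : R) : R -> R := gamma_pdf L (/ L).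
Definition dens_const (L : R) : R := / (Rpower (/ L) L * GammaFn L).
Definition dens_mass (L : R) : R := Int0inf (dens L).

Lemma dens_const_pos L : 0 < L -> 0 < dens_const L.
Proof.
  intros HL. apply Rinv_0_lt_compat, Rmult_lt_0_compat; [apply Rpower_pos | apply GammaFn_pos; auto].
Qed.

Lemma dens_eq L y : 0 < L -> dens L y = dens_const L * Rpower y (L - 1) * exp (- (L * y)).
Proof. intros HL. unfold dens, gamma_pdf, dens_const. f_equal. f_equal. field. lra. Qed.

Lemma dens_continuous L y : 0 < L -> 0 < y -> continuous (dens L) y.
Proof.
  intros HL Hy. apply (continuous_ext (fun y => dens_const L * Rpower y (L - 1) * exp (- (L * y)))).
  - intros; symmetry; apply dens_eq; auto.
  - apply continuous_of_derive. unfold Rpower. auto_derive. auto.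
Qed.

Lemma continuous_scal_dens L c y : 0 < L -> 0 < y -> continuous (fun h => c * dens L h) y.
Proof.
  intros HL Hy. apply (continuous_mult (fun _ => c) (dens L));
    [apply continuous_const | apply dens_continuous; auto].
Qed.

Lemma dens_pos L y : 0 < L -> 0 < y -> 0 < dens L y.
Proof.
  intros HL Hy. rewrite dens_eq by auto.
  apply Rmult_lt_0_compat; [apply Rmult_lt_0_compat; [apply dens_const_pos; auto | apply Rpower_pos]
    | apply exp_pos].
Qed.

Lemma dens_le_power L y : 0 < L -> 0 < y -> dens L y <= dens_const L * Rpower y (L - 1).
Proof.
  intros HL Hy. rewrite dens_eq by auto.
  rewrite <- (Rmult_1_r (dens_const L * Rpower y (L - 1))) at 2.
  pose proof (dens_const_pos L HL). pose proof (Rpower_pos y (L - 1)).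
  apply Rmult_le_compat_l; [nra|]. rewrite <- exp_0. apply exp_le. nra.
Qed.

Lemma dens_tail L : 0 < L -> exists K, 0 < K /\ forall y, 1 <= y -> dens L y <= K / (y * y).
Proof.
  intros HL. destruct (power_exp_tail (L - 1) L HL) as (K & HK & HKb).
  pose proof (dens_const_pos L HL).
  exists (dens_const L * K). split; [nra|].
  intros y Hy. rewrite dens_eq by lra. rewrite Rmult_assoc. unfold Rdiv. rewrite Rmult_assoc.
  apply Rmult_le_compat_l; [lra|]. apply HKb; auto.
Qed.

Lemma dens_ge_power L y Y : 0 < L -> 0 < y <= Y ->
  dens_const L * exp (- (L * Y)) * Rpower y (L - 1) <= dens L y.
Proof.
  intros HL Hy. rewrite dens_eq by lra.
  rewrite (Rmult_assoc (dens_const L)), (Rmult_comm (exp _)), <- Rmult_assoc.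
  pose proof (dens_const_pos L HL). pose proof (Rpower_pos y (L - 1)).
  apply Rmult_le_compat_l; [nra|]. apply exp_le. nra.
Qed.

Lemma tame_mul_dens (phi : R -> R) L M : 0 < L -> 0 <= M ->
  locally_integrable (fun y => phi y * dens L y) ->
  (forall y, 0 < y -> 0 <= phi y <= M) -> tame (fun y => phi y * dens L y).
Proof.
  intros HL HM Hl Hphi. destruct (dens_tail L HL) as (K & HK & HKb).
  pose proof (dens_const_pos L HL).
  apply (tame_of_power_bounds _ L (M * dens_const L) (M * K)); auto; try nra.
  - intros y Hy. apply Rmult_le_pos; [apply Hphi | left; apply dens_pos]; auto.
  - intros y Hy. rewrite Rmult_assoc.
    apply Rmult_le_compat; [apply Hphi; lra | left; apply dens_pos; lra | apply Hphi; lra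
      | apply dens_le_power; lra].
  - intros y Hy. unfold Rdiv. rewrite Rmult_assoc.
    apply Rmult_le_compat; [apply Hphi; lra | left; apply dens_pos; lra | apply Hphi; lra
      | apply HKb; lra].
Qed.

Lemma tame_dens L : 0 < L -> tame (dens L).
Proof.
  intros HL. apply (tame_ext (fun y => 1 * dens L y)); [|intros; ring].
  apply (tame_mul_dens (fun _ => 1) L 1 HL ltac:(lra)); [|intros; lra].
  apply locally_integrable_continuous. intros y Hy. apply continuous_scal_dens; auto.
Qed.

(* On [x, 2x] the density dominates y^(L-1) up to a constant, uniformly for
   x <= 4; hence a box lower bound of order x^L. *)
Definition box_const (L : R) : R := dens_const L * exp (- (L * 8)) * Rmin 1 (Rpower 2 (L - 1)).

Lemma box_const_pos L : 0 < L -> 0 < box_const L.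
Proof.
  intros. unfold box_const. apply Rmult_lt_0_compat;
    [apply Rmult_lt_0_compat; [apply dens_const_pos; auto | apply exp_pos]
    | apply Rmin_glb_lt; [lra | apply Rpower_pos]].
Qed.

Lemma Rpower_pred_doubling L x y : 0 < x -> x <= y <= 2 * x ->
  Rmin 1 (Rpower 2 (L - 1)) * Rpower x (L - 1) <= Rpower y (L - 1).
Proof.
  intros Hx Hy. pose proof (Rpower_pos x (L - 1)). destruct (Rle_dec 0 (L - 1)).
  - eapply Rle_trans; [apply Rmult_le_compat_r; [lra | apply Rmin_l]|].
    rewrite Rmult_1_l. apply Rle_Rpower_l; lra.
  - eapply Rle_trans; [apply Rmult_le_compat_r; [lra | apply Rmin_r]|].
    rewrite Rpower_mult_distr by lra. apply Rpower_le_base_nonpos; lra.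
Qed.

Lemma Int0inf_ge_box_dens (phi : R -> R) L x m : 0 < L -> 0 < x <= 4 -> 0 <= m ->
  tame (fun y => phi y * dens L y) -> (forall y, x < y < 2 * x -> m <= phi y) ->
  m * box_const L * Rpower x L <= Int0inf (fun y => phi y * dens L y).
Proof.
  intros HL Hx Hm HG Hphi. pose proof (box_const_pos L HL). pose proof (dens_const_pos L HL).
  pose proof (Rpower_pos x (L - 1)).
  eapply Rle_trans; [|apply (Int0inf_ge_box _ x (2 * x) (m * box_const L * Rpower x (L - 1)) HG); try lra].
  - rewrite (Rpower_succ_pred x L) by lra. right; ring.
  - intros z Hz. rewrite Rmult_assoc.
    apply Rmult_le_compat; [auto | nra | apply Hphi; auto|].
    eapply Rle_trans; [|apply (dens_ge_power L z 8); auto; lra].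
    unfold box_const. rewrite Rmult_assoc. pose proof (exp_pos (- (L * 8))).
    apply Rmult_le_compat_l; [nra|]. apply Rpower_pred_doubling; lra.
Qed.

Lemma dens_mass_pos L : 0 < L -> 0 < dens_mass L.
Proof.
  intros HL. unfold dens_mass. pose proof (box_const_pos L HL).
  assert (HG : tame (fun y => 1 * dens L y))
    by (apply (tame_ext (dens L)); [apply tame_dens; auto | intros; ring]).
  rewrite (Int0inf_ext _ (fun y => 1 * dens L y)) by (auto using tame_dens; intros; ring).
  eapply Rlt_le_trans; [|apply (Int0inf_ge_box_dens (fun _ => 1) L 1 1); auto; intros; lra].
  rewrite Rpower_one_l. lra.
Qed.

(** * Reduction of ED_s to a one-dimensional integral *)

(* With rates R_c = rc/2 log2 rho and R_s = rs/2 log2 rho, the channel is in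
   outage iff 1 + rho h0 <= rho^rc, i.e. h0 <= outage_level; otherwise the
   side information is in outage iff gamma0 <= gamma_crit. *)
Definition chan_thr (rho rc : R) : R := Rpower rho rc.
Definition src_thr (rho rs rc : R) : R := Rpower rho (rs + rc).
Definition outage_level (rho rc : R) : R := (chan_thr rho rc - 1) / rho.
Definition gamma_crit (rho rs rc : R) : R :=
  ((src_thr rho rs rc - 1) / (chan_thr rho rc - 1) - 1) / rho.
Definition outage_ind (rho rc h : R) : R :=
  if Rle_dec (1 + rho * h) (chan_thr rho rc) then 1 else 0.

(* Probabilities (up to the common normalisation [dens_mass]) of channel
   outage and of its complement. *)
Definition P_out (Lc rho rc : R) : R := Int0inf (fun h => outage_ind rho rc h * dens Lc h).
Definition P_ok (Lc rho rc : R) : R := Int0inf (fun h => (1 - outage_ind rho rc h) * dens Lc h).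

Definition cond_dist (Lc rho rs rc g : R) : R :=
  if Rle_dec g (gamma_crit rho rs rc) then dens_mass Lc / (rho * g + 1)
  else P_out Lc rho rc / (rho * g + 1) + P_ok Lc rho rc / (rho * g + src_thr rho rs rc).
Definition ED_red (Ls Lc rho rs rc : R) : R := Int0inf (fun g => cond_dist Lc rho rs rc g * dens Ls g).

Lemma ln_le_iff x y : 0 < x -> 0 < y -> (ln x <= ln y <-> x <= y).
Proof.
  intros Hx Hy. split; [|apply ln_le; auto].
  intros H. rewrite <- (exp_ln x), <- (exp_ln y) by auto. apply exp_le; auto.
Qed.

Lemma rate_half_log2 rho r : r / 2 * log2 rho = / 2 * log2 (Rpower rho r).
Proof. unfold log2. rewrite ln_Rpower. pose proof ln2_pos. field. lra. Qed.

Lemma half_log2_le_iff x y : 0 < x -> 0 < y -> (/ 2 * log2 x <= / 2 * log2 y <-> x <= y).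
Proof.
  intros Hx Hy. rewrite <- (ln_le_iff x y) by auto. unfold log2. pose proof ln2_pos.
  split; intros H'.
  - apply (Rmult_le_compat_l (2 * ln 2)) in H'; [|lra].
    replace (2 * ln 2 * (/ 2 * (ln x / ln 2))) with (ln x) in H' by (field; lra).
    replace (2 * ln 2 * (/ 2 * (ln y / ln 2))) with (ln y) in H' by (field; lra). auto.
  - apply Rmult_le_compat_l; [lra|]. unfold Rdiv. apply Rmult_le_compat_r; auto.
    left; apply Rinv_0_lt_compat; auto.
Qed.

Lemma Rpower2_rate rho x : 0 < rho -> Rpower 2 (2 * (x / 2 * log2 rho)) = Rpower rho x.
Proof. intros H. unfold Rpower, log2. f_equal. pose proof ln2_pos. field. lra. Qed.

Lemma chan_thr_gt_1 rho rc : 1 < rho -> 0 < rc -> 1 < chan_thr rho rc.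
Proof. intros. unfold chan_thr. rewrite <- (Rpower_O rho) by lra. apply Rpower_lt; auto. Qed.

Lemma src_thr_ge_1 rho rs rc : 1 < rho -> 0 <= rs -> 0 < rc -> 1 <= src_thr rho rs rc.
Proof. intros. apply Rpower_ge_1; lra. Qed.

Lemma side_outage_iff rho rs rc g : 1 < rho -> 0 < rc -> 0 < g ->
  (chan_thr rho rc <= 1 + (src_thr rho rs rc - 1) / (1 + rho * g) <-> g <= gamma_crit rho rs rc).
Proof.
  intros Hr Hc Hg. pose proof (chan_thr_gt_1 rho rc Hr Hc). unfold gamma_crit.
  set (A := chan_thr rho rc) in *. set (B := src_thr rho rs rc).
  assert (0 < 1 + rho * g) by nra.
  assert (E1 : (1 + (B - 1) / (1 + rho * g) - A) * (1 + rho * g) = B + rho * g - A * (1 + rho * g))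
    by (field; lra).
  assert (E2 : (((B - 1) / (A - 1) - 1) / rho - g) * (rho * (A - 1)) = B + rho * g - A * (1 + rho * g))
    by (field; lra).
  assert (0 < rho * (A - 1)) by nra.
  split; intros H'.
  - apply Rge_le, Rminus_ge, Rle_ge. apply (Rmult_le_reg_r (rho * (A - 1))); [lra|].
    rewrite Rmult_0_l, E2, <- E1. apply Rmult_le_pos; lra.
  - apply Rge_le, Rminus_ge, Rle_ge. apply (Rmult_le_reg_r (1 + rho * g)); [lra|].
    rewrite Rmult_0_l, E1, <- E2. apply Rmult_le_pos; lra.
Qed.

Lemma dist_s_rates rs rc rho h g : 1 < rho -> 0 <= rs -> 0 < rc -> 0 < h -> 0 < g ->
  dist_s (rs / 2 * log2 rho) (rc / 2 * log2 rho) (rho * h) (rho * g) =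
  if Rle_dec g (gamma_crit rho rs rc) then / (rho * g + 1)
  else outage_ind rho rc h / (rho * g + 1) + (1 - outage_ind rho rc h) / (rho * g + src_thr rho rs rc).
Proof.
  intros Hr Hs Hc Hh Hg.
  assert (Esum : rs / 2 * log2 rho + rc / 2 * log2 rho = (rs + rc) / 2 * log2 rho) by field.
  assert (E0 : Dd 0 (rho * g) = / (rho * g + 1))
    by (unfold Dd; rewrite Rmult_0_r, Rpower_O by lra; auto).
  assert (E1 : Dd (rs / 2 * log2 rho + rc / 2 * log2 rho) (rho * g) = / (rho * g + src_thr rho rs rc))
    by (unfold Dd; rewrite Esum, Rpower2_rate by lra; auto).
  pose proof (src_thr_ge_1 rho rs rc Hr Hs Hc).
  assert (Hpos : 0 < 1 + (src_thr rho rs rc - 1) / (1 + rho * g))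
    by (assert (0 <= (src_thr rho rs rc - 1) / (1 + rho * g)) by (apply Rdiv_le_0_compat; nra); lra).
  assert (Hh' : / 2 * log2 (1 + rho * h) <= rc / 2 * log2 rho <-> 1 + rho * h <= chan_thr rho rc)
    by (rewrite rate_half_log2; apply half_log2_le_iff; [nra | apply Rpower_pos]).
  assert (Hg' : rc / 2 * log2 rho <= / 2 * log2 (1 + (Rpower 2 (2 * (rs / 2 * log2 rho + rc / 2 * log2 rho)) - 1) / (1 + rho * g))
                <-> g <= gamma_crit rho rs rc).
  { rewrite Esum, Rpower2_rate, rate_half_log2, half_log2_le_iff by (auto using Rpower_pos; lra).
    apply side_outage_iff; auto. }
  unfold dist_s, in_Os, outage_ind.
  destruct (Rle_dec (/ 2 * log2 (1 + rho * h)) (rc / 2 * log2 rho)) as [H1|H1];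
  destruct (Rle_dec (1 + rho * h) (chan_thr rho rc)) as [H2|H2];
  destruct (Rle_dec g (gamma_crit rho rs rc)) as [H3|H3];
  try destruct (Rle_dec (rc / 2 * log2 rho) _) as [H4|H4];
  first [ tauto | rewrite E0; unfold Rdiv; ring | rewrite E1; unfold Rdiv; ring ].
Qed.

Lemma outage_ind_range rho rc h : 0 <= outage_ind rho rc h <= 1.
Proof. unfold outage_ind. destruct Rle_dec; lra. Qed.

Lemma outage_ind_1 rho rc h : 1 < rho -> h <= outage_level rho rc -> outage_ind rho rc h = 1.
Proof.
  intros Hr H. unfold outage_ind, outage_level in *. destruct Rle_dec as [|n]; auto. exfalso; apply n.
  apply (Rmult_le_compat_l rho) in H; [|lra].
  replace (rho * ((chan_thr rho rc - 1) / rho)) with (chan_thr rho rc - 1) in H by (field; lra). lra.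
Qed.

Lemma outage_ind_0 rho rc h : 1 < rho -> outage_level rho rc < h -> outage_ind rho rc h = 0.
Proof.
  intros Hr H. unfold outage_ind, outage_level in *. destruct Rle_dec as [r|]; auto. exfalso.
  apply (Rmult_lt_compat_l rho) in H; [|lra].
  replace (rho * ((chan_thr rho rc - 1) / rho)) with (chan_thr rho rc - 1) in H by (field; lra). lra.
Qed.

Lemma tame_out Lc rho rc : 0 < Lc -> 1 < rho -> tame (fun h => outage_ind rho rc h * dens Lc h).
Proof.
  intros HL Hr. apply (tame_mul_dens _ Lc 1 HL ltac:(lra)); [|intros; apply outage_ind_range].
  apply (locally_integrable_piecewise _ (fun h => 1 * dens Lc h) (fun h => 0 * dens Lc h)
           (outage_level rho rc)); intros; try apply continuous_scal_dens; auto.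
  - rewrite outage_ind_1; auto; lra.
  - rewrite outage_ind_0; auto.
Qed.

Lemma tame_ok Lc rho rc : 0 < Lc -> 1 < rho -> tame (fun h => (1 - outage_ind rho rc h) * dens Lc h).
Proof.
  intros HL Hr. apply (tame_mul_dens _ Lc 1 HL ltac:(lra));
    [|intros; pose proof (outage_ind_range rho rc y); lra].
  apply (locally_integrable_piecewise _ (fun h => 0 * dens Lc h) (fun h => 1 * dens Lc h)
           (outage_level rho rc)); intros; try apply continuous_scal_dens; auto.
  - rewrite outage_ind_1 by (auto; lra). f_equal; ring.
  - rewrite outage_ind_0 by auto. f_equal; ring.
Qed.

Lemma P_out_range Lc rho rc : 0 < Lc -> 1 < rho -> 0 <= P_out Lc rho rc <= dens_mass Lc.
Proof.
  intros. split; [apply Int0inf_nonneg, tame_out; auto|].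
  apply Int0inf_le; [apply tame_out | apply tame_dens|]; auto.
  intros. pose proof (outage_ind_range rho rc x). pose proof (dens_pos Lc x H H1). nra.
Qed.

Lemma P_ok_range Lc rho rc : 0 < Lc -> 1 < rho -> 0 <= P_ok Lc rho rc <= dens_mass Lc.
Proof.
  intros. split; [apply Int0inf_nonneg, tame_ok; auto|].
  apply Int0inf_le; [apply tame_ok | apply tame_dens|]; auto.
  intros. pose proof (outage_ind_range rho rc x). pose proof (dens_pos Lc x H H1). nra.
Qed.

Lemma inner_integral_eq Lc rs rc rho g : 0 < Lc -> 1 < rho -> 0 <= rs -> 0 < rc -> 0 < g ->
  Int0inf (fun h => dist_s (rs / 2 * log2 rho) (rc / 2 * log2 rho) (rho * h) (rho * g)
                    * gamma_pdf Lc (/ Lc) h)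
  = cond_dist Lc rho rs rc g.
Proof.
  intros HL Hr Hs Hc Hg. pose proof (src_thr_ge_1 rho rs rc Hr Hs Hc).
  assert (c1 : 0 < / (rho * g + 1)) by (apply Rinv_0_lt_compat; nra).
  assert (c2 : 0 < / (rho * g + src_thr rho rs rc)) by (apply Rinv_0_lt_compat; nra).
  assert (G1 := tame_out Lc rho rc HL Hr). assert (G2 := tame_ok Lc rho rc HL Hr).
  unfold cond_dist. destruct (Rle_dec g (gamma_crit rho rs rc)) as [H1|H1].
  - rewrite <- (Int0inf_ext (fun h => / (rho * g + 1) * dens Lc h)).
    + rewrite Int0inf_scal by (auto using tame_dens). unfold dens_mass, Rdiv. ring.
    + apply tame_scal; [lra | apply tame_dens; auto].
    + intros h Hh. rewrite dist_s_rates by auto. destruct Rle_dec; [reflexivity | tauto].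
  - rewrite <- (Int0inf_ext (fun h => / (rho * g + 1) * (outage_ind rho rc h * dens Lc h)
                  + / (rho * g + src_thr rho rs rc) * ((1 - outage_ind rho rc h) * dens Lc h))).
    + rewrite Int0inf_plus, !Int0inf_scal by (auto using tame_scal with real).
      unfold P_out, P_ok, Rdiv. ring.
    + apply tame_plus; apply tame_scal; auto; lra.
    + intros h Hh. rewrite dist_s_rates by auto. destruct Rle_dec; [tauto|].
      unfold dens, Rdiv. ring.
Qed.

Lemma cond_dist_range Lc rho a b y : 0 < Lc -> 1 < rho -> 0 <= a -> 0 < b -> 0 < y ->
  0 <= cond_dist Lc rho a b y <= 3 * dens_mass Lc.
Proof.
  intros HL Hr Ha Hb Hy. pose proof (src_thr_ge_1 rho a b Hr Ha Hb).
  pose proof (P_out_range Lc rho b HL Hr). pose proof (P_ok_range Lc rho b HL Hr).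
  pose proof (dens_mass_pos Lc HL). assert (0 < rho * y) by nra.
  assert (Hshrink : forall P D, 0 <= P -> 1 <= D -> 0 <= P / D <= P).
  { intros P D HP HD. split; [apply Rdiv_le_0_compat; lra|].
    unfold Rdiv. rewrite <- (Rmult_1_r P) at 2. apply Rmult_le_compat_l; auto.
    rewrite <- Rinv_1. apply Rinv_le_contravar; lra. }
  unfold cond_dist. destruct Rle_dec.
  - pose proof (Hshrink (dens_mass Lc) (rho * y + 1) ltac:(lra) ltac:(lra)). lra.
  - pose proof (Hshrink (P_out Lc rho b) (rho * y + 1) ltac:(lra) ltac:(lra)).
    pose proof (Hshrink (P_ok Lc rho b) (rho * y + src_thr rho a b) ltac:(lra) ltac:(lra)). lra.
Qed.

Lemma tame_outer Ls Lc rho rs rc : 0 < Ls -> 0 < Lc -> 1 < rho -> 0 <= rs -> 0 < rc ->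
  tame (fun g => cond_dist Lc rho rs rc g * dens Ls g).
Proof.
  intros HLs HLc Hr Hs Hc. pose proof (src_thr_ge_1 rho rs rc Hr Hs Hc).
  apply (tame_mul_dens _ Ls (3 * dens_mass Lc) HLs);
    [pose proof (dens_mass_pos Lc HLc); lra | | intros; apply cond_dist_range; auto].
  apply (locally_integrable_piecewise _ (fun g => dens_mass Lc / (rho * g + 1) * dens Ls g)
        (fun g => (P_out Lc rho rc / (rho * g + 1) + P_ok Lc rho rc / (rho * g + src_thr rho rs rc))
                  * dens Ls g) (gamma_crit rho rs rc)).
  - intros y Hy. apply (continuous_mult (fun g => dens_mass Lc / (rho * g + 1)) (dens Ls));
      [apply continuous_of_derive; auto_derive; nra | apply dens_continuous; auto].
  - intros y Hy. apply (continuous_mult (fun g => P_out Lc rho rc / (rho * g + 1)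
                                         + P_ok Lc rho rc / (rho * g + src_thr rho rs rc)) (dens Ls));
      [apply continuous_of_derive; auto_derive; nra | apply dens_continuous; auto].
  - intros y Hy Hy2. unfold cond_dist. destruct Rle_dec; auto. lra.
  - intros y Hy Hy2. unfold cond_dist. destruct Rle_dec; auto. lra.
Qed.

Lemma EDs_reduced Ls Lc rho rs rc : 0 < Ls -> 0 < Lc -> 1 < rho -> 0 <= rs -> 0 < rc ->
  EDs Ls Lc rho (rs / 2 * log2 rho) (rc / 2 * log2 rho) = ED_red Ls Lc rho rs rc.
Proof.
  intros. unfold EDs, ED_red. symmetry. apply Int0inf_ext; [apply tame_outer; auto|].
  intros g Hg. rewrite inner_integral_eq by auto. reflexivity.
Qed.

(** * Asymptotics in rho *)

Definition for_large_rho (P : R -> Prop) : Prop :=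
  exists r0, 1 < r0 /\ forall rho, r0 < rho -> P rho.

Lemma for_large_rho_and (P Q : R -> Prop) :
  for_large_rho P -> for_large_rho Q -> for_large_rho (fun rho => P rho /\ Q rho).
Proof.
  intros (r1 & H1 & HP) (r2 & H2 & HQ). exists (Rmax r1 r2).
  pose proof (Rmax_l r1 r2). pose proof (Rmax_r r1 r2).
  split; [lra|]. intros rho Hr. split; [apply HP | apply HQ]; lra.
Qed.

Lemma for_large_rho_mono (P Q : R -> Prop) :
  for_large_rho P -> (forall rho, 1 < rho -> P rho -> Q rho) -> for_large_rho Q.
Proof. intros (r0 & H0 & HP) HPQ. exists r0. split; auto. intros rho Hr. apply HPQ; auto; lra. Qed.

Lemma for_large_rho_of_gt_2 (P : R -> Prop) :
  (forall rho, 2 < rho -> P rho) -> for_large_rho P.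
Proof. intros HP. exists 2. split; [lra|]. intros; apply HP; lra. Qed.

Lemma for_large_rho_Rpower x K : 0 < x -> for_large_rho (fun rho => K <= Rpower rho x).
Proof.
  intros Hx. set (t := Rabs (ln (Rabs K + 1)) / x + 1).
  assert (Ht : 1 <= t) by (unfold t; assert (0 <= Rabs (ln (Rabs K + 1)) / x)
    by (apply Rdiv_le_0_compat; [apply Rabs_pos | lra]); lra).
  exists (exp t). split; [pose proof (exp_ineq1_le t); lra|].
  intros rho Hr. assert (Hr0 : 0 < rho) by (pose proof (exp_pos t); lra).
  apply Rle_trans with (Rabs K + 1); [pose proof (Rle_abs K); lra|].
  rewrite <- (exp_ln (Rabs K + 1)) by (pose proof (Rabs_pos K); lra).
  unfold Rpower. apply exp_le.
  apply Rlt_le, ln_le in Hr; [|apply exp_pos]. rewrite ln_exp in Hr.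
  apply Rmult_le_compat_l with (r := x) in Hr; [|lra].
  replace (x * t) with (Rabs (ln (Rabs K + 1)) + x) in Hr by (unfold t; field; lra).
  pose proof (Rle_abs (ln (Rabs K + 1))). nra.
Qed.

(* Channel outage probability: P_out(rho) is of exact order rho^(-outage_exp),
   since outage means h0 <= outage_level ~ rho^(rc-1) and the density
   behaves like h0^(Lc-1) near 0. *)
Definition outage_exp (Lc rc : R) : R := Lc * Rmax (1 - rc) 0.

Lemma outage_level_pos rho rc : 1 < rho -> 0 < rc -> 0 < outage_level rho rc.
Proof.
  intros. unfold outage_level. pose proof (chan_thr_gt_1 rho rc H H0). apply Rdiv_lt_0_compat; lra.
Qed.

Lemma outage_level_le rho rc : 1 < rho -> outage_level rho rc <= Rpower rho (rc - 1).
Proof.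
  intros. unfold outage_level, chan_thr. rewrite Rpower_pred by lra.
  unfold Rdiv. apply Rmult_le_compat_r; [left; apply Rinv_0_lt_compat|]; lra.
Qed.

Lemma P_out_upper Lc rc : 0 < Lc -> 0 < rc -> exists K, 0 < K /\ forall rho, 1 < rho ->
  P_out Lc rho rc <= K * Rpower rho (- outage_exp Lc rc).
Proof.
  intros HL Hc. pose proof (dens_const_pos Lc HL). pose proof (dens_mass_pos Lc HL).
  assert (0 < dens_const Lc / Lc) by (apply Rdiv_lt_0_compat; auto).
  exists (dens_const Lc / Lc + dens_mass Lc). split; [lra|].
  intros rho Hr. unfold outage_exp. destruct (Rle_dec rc 1).
  - rewrite Rmax_left by lra.
    pose proof (outage_level_pos rho rc Hr Hc) as Ht. pose proof (outage_level_le rho rc Hr) as Ht2.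
    assert (Ht1 : outage_level rho rc <= 1) by (eapply Rle_trans; [apply Ht2 | apply Rpower_le_1; lra]).
    eapply Rle_trans.
    { apply (Int0inf_three_regimes _ Lc (outage_level rho rc) (dens_const Lc) 0 0); try lra.
      - apply tame_out; auto.
      - intros y Hy. eapply Rle_trans; [|apply dens_le_power; lra].
        pose proof (outage_ind_range rho rc y). pose proof (dens_pos Lc y HL ltac:(lra)). nra.
      - intros y Hy. rewrite outage_ind_0 by (auto; lra). lra.
      - intros y Hy. rewrite outage_ind_0 by (auto; lra). unfold Rdiv. lra. }
    rewrite !Rmult_0_l, !Rplus_0_r.
    assert (Rpower (outage_level rho rc) Lc <= Rpower rho (- (Lc * (1 - rc)))).
    { eapply Rle_trans; [apply Rle_Rpower_l; [lra | split; [exact Ht | exact Ht2]]|].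
      rewrite Rpower_mult. right; f_equal; ring. }
    pose proof (Rpower_pos rho (- (Lc * (1 - rc)))).
    replace (dens_const Lc * Rpower (outage_level rho rc) Lc / Lc)
      with (dens_const Lc / Lc * Rpower (outage_level rho rc) Lc) by (field; lra).
    nra.
  - rewrite Rmax_right, Rmult_0_r, Ropp_0, Rpower_O by lra.
    pose proof (P_out_range Lc rho rc HL Hr). lra.
Qed.

Lemma P_out_lower Lc rc : 0 < Lc -> 0 < rc -> exists k, 0 < k /\
  for_large_rho (fun rho => k * Rpower rho (- outage_exp Lc rc) <= P_out Lc rho rc).
Proof.
  intros HL Hc. pose proof (box_const_pos Lc HL).
  exists (box_const Lc * Rpower (/ 4) Lc). split; [apply Rmult_lt_0_compat; auto using Rpower_pos|].
  unfold outage_exp. destruct (Rle_dec rc 1) as [H1|H1].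
  - rewrite Rmax_left by lra.
    apply (for_large_rho_mono _ _ (for_large_rho_Rpower rc 2 Hc)). intros rho Hr Hrc.
    assert (Ht : Rpower rho (rc - 1) / 2 <= outage_level rho rc).
    { unfold outage_level, chan_thr. rewrite Rpower_pred by lra.
      unfold Rdiv. rewrite Rmult_assoc, (Rmult_comm (/ rho)), <- Rmult_assoc.
      apply Rmult_le_compat_r; [left; apply Rinv_0_lt_compat|]; lra. }
    pose proof (outage_level_le rho rc Hr) as Ht2.
    assert (Hpos : 0 < Rpower rho (rc - 1)) by apply Rpower_pos.
    assert (Hle1 : Rpower rho (rc - 1) <= 1) by (apply Rpower_le_1; lra).
    eapply Rle_trans; [|apply (Int0inf_ge_box_dens (outage_ind rho rc) Lc (outage_level rho rc / 2) 1); try lra].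
    + rewrite Rmult_1_l, Rmult_assoc. apply Rmult_le_compat_l; [lra|].
      replace (- (Lc * (1 - rc))) with ((rc - 1) * Lc) by ring. rewrite <- Rpower_mult.
      rewrite Rpower_mult_distr by (try lra; apply Rinv_0_lt_compat; lra).
      apply Rle_Rpower_l; [lra|]. pose proof (Rinv_0_lt_compat 4 ltac:(lra)). split; nra.
    + apply tame_out; auto.
    + intros y Hy. rewrite outage_ind_1 by (auto; lra). lra.
  - rewrite Rmax_right, Rmult_0_r, Ropp_0 by lra.
    apply for_large_rho_of_gt_2. intros rho Hrho. rewrite Rpower_O by lra.
    assert (1 / 2 <= outage_level rho rc).
    { unfold outage_level, chan_thr.
      assert (rho <= Rpower rho rc) by (rewrite <- (Rpower_1 rho) at 1 by lra; apply Rle_Rpower; lra).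
      apply (Rmult_le_reg_l rho); [lra|].
      replace (rho * ((Rpower rho rc - 1) / rho)) with (Rpower rho rc - 1) by (field; lra). lra. }
    eapply Rle_trans; [|apply (Int0inf_ge_box_dens (outage_ind rho rc) Lc (/ 4) 1); try lra].
    + right; ring.
    + apply tame_out; lra.
    + intros y Hy. rewrite outage_ind_1 by lra. lra.
Qed.

Lemma P_ok_lower Lc rc : 0 < Lc -> 0 < rc -> rc <= 1 ->
  forall rho, 1 < rho -> box_const Lc <= P_ok Lc rho rc.
Proof.
  intros HL Hc H1 rho Hr.
  assert (outage_level rho rc <= 1)
    by (eapply Rle_trans; [apply outage_level_le; auto | apply Rpower_le_1; lra]).
  eapply Rle_trans; [|apply (Int0inf_ge_box_dens (fun h => 1 - outage_ind rho rc h) Lc 1 1); try lra].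
  - rewrite Rpower_one_l. lra.
  - apply tame_ok; auto.
  - intros y Hy. rewrite outage_ind_0 by (auto; lra). lra.
Qed.

(** * The exponent and the three regimes of the outer integral *)

Definition min1 (x : R) : R := Rmin x 1.

(* Exponents of the three contributions to ED_s at rates (a, b) = (rs, rc):
   side information in outage (only when a > 0), channel outage, and
   successful decoding.  [exponent] is the resulting distortion exponent. *)
Definition exp_side_outage (L a : R) : R := L - min1 a * Rmax (L - 1) 0.
Definition exp_chan_outage (L M a b : R) : R := outage_exp M b + min1 a + (1 - min1 a) * min1 L.
Definition exp_success (L a b : R) : R := (a + b) + (1 - min1 (a + b)) * min1 L.
Definition exponent (L M a b : R) : R :=
  if Rle_dec a 0 then Rmin (exp_chan_outage L M a b) (exp_success L a b)
  else Rmin (exp_side_outage L a) (Rmin (exp_chan_outage L M a b) (exp_success L a b)).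

Lemma min1_range a : 0 <= a -> 0 <= min1 a <= 1 /\ min1 a <= a.
Proof. intros. unfold min1. split; [split; [apply Rmin_glb; lra | apply Rmin_r] | apply Rmin_l]. Qed.

Lemma min1_pos L : 0 < L -> 0 < min1 L <= 1 /\ min1 L <= L.
Proof. intros. unfold min1. split; [split; [apply Rmin_glb_lt; lra | apply Rmin_r] | apply Rmin_l]. Qed.

Lemma exponent_le_side_outage L M a b : 0 < a -> exponent L M a b <= exp_side_outage L a.
Proof. intros. unfold exponent. destruct Rle_dec; [lra | apply Rmin_l]. Qed.

Lemma exponent_le_chan_outage L M a b : exponent L M a b <= exp_chan_outage L M a b.
Proof.
  unfold exponent. destruct Rle_dec; [apply Rmin_l|].
  eapply Rle_trans; [apply Rmin_r | apply Rmin_l].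
Qed.

Lemma exponent_le_success L M a b : exponent L M a b <= exp_success L a b.
Proof.
  unfold exponent. destruct Rle_dec; [apply Rmin_r|].
  eapply Rle_trans; [apply Rmin_r | apply Rmin_r].
Qed.

Lemma exponent_pos L M a b : 0 < L -> 0 < M -> 0 <= a -> 0 < b -> 0 < exponent L M a b.
Proof.
  intros HL HM Ha Hb.
  pose proof (min1_range a Ha) as [[? ?] ?]. pose proof (min1_pos L HL) as [[? ?] ?].
  assert (0 < exp_side_outage L a).
  { unfold exp_side_outage. destruct (Rle_dec L 1); [rewrite Rmax_right by lra | rewrite Rmax_left by lra]; nra. }
  assert (0 < exp_chan_outage L M a b).
  { unfold exp_chan_outage, outage_exp.
    assert (0 <= M * Rmax (1 - b) 0) by (apply Rmult_le_pos; [lra | apply Rmax_r]).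
    destruct (Req_dec (min1 a) 1) as [E|E]; [rewrite E; lra | nra]. }
  assert (0 < exp_success L a b).
  { unfold exp_success. assert (min1 (a + b) <= 1) by apply Rmin_r. nra. }
  unfold exponent. destruct Rle_dec; repeat apply Rmin_glb_lt; auto.
Qed.

(* The product of the Gamma(L) density's small-argument profile min(y,1)^L
   with a distortion 1/(rho y + D). *)
Definition weight (rho L D y : R) : R := Rpower (min1 y) L * / (rho * y + D).

Lemma weight_pos rho L D y : 1 < rho -> 0 < y -> 1 <= D -> 0 < weight rho L D y.
Proof. intros. unfold weight. apply Rmult_lt_0_compat; [apply Rpower_pos | apply Rinv_0_lt_compat; nra]. Qed.

Lemma ln_weight rho L D y : 1 < rho -> 0 < y -> 1 <= D ->
  ln (weight rho L D y) = L * ln (min1 y) + ln (/ (rho * y + D)).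
Proof.
  intros. unfold weight. rewrite ln_mult, ln_Rpower; auto; [apply Rpower_pos | apply Rinv_0_lt_compat; nra].
Qed.

Lemma ln_distortion rho y D : 1 < rho -> 0 < y -> 1 <= D ->
  ln (/ (rho * y + D)) <= - ln D /\ ln (/ (rho * y + D)) <= - (ln rho + ln y).
Proof.
  intros Hr Hy HD. assert (0 < rho * y) by nra.
  rewrite ln_Rinv by lra. split.
  - assert (ln D <= ln (rho * y + D)) by (apply ln_le; lra). lra.
  - rewrite <- ln_mult by lra. assert (ln (rho * y) <= ln (rho * y + D)) by (apply ln_le; lra). lra.
Qed.

Lemma ln_min1 y : 0 < y -> ln (min1 y) <= 0 /\ ln (min1 y) <= ln y.
Proof.
  intros Hy. assert (0 < min1 y) by (apply Rmin_glb_lt; lra). split.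
  - rewrite <- ln_1. apply ln_le; auto. apply Rmin_r.
  - apply ln_le; auto. apply Rmin_l.
Qed.

Lemma le_of_ln X c e rho : 0 < X -> ln X <= c + e * ln rho -> X <= exp c * Rpower rho e.
Proof.
  intros HX H. rewrite <- (exp_ln X) by auto. unfold Rpower. rewrite <- exp_plus. apply exp_le. lra.
Qed.

(* Each of the following bounds is a piecewise-linear inequality in
   (ln y, ln rho), checked by cases on the signs of ln y and ln (rho y). *)

Lemma weight_bound_side_outage rho L a y : 1 < rho -> 0 < L -> 0 < a -> 0 < y ->
  rho * y <= 2 * Rpower rho a ->
  weight rho L 1 y <= exp (Rmax (L - 1) 0 * ln 2) * Rpower rho (- exp_side_outage L a).
Proof.
  intros Hr HL Ha Hy Hreg. apply le_of_ln; [apply weight_pos; auto; lra|]. rewrite ln_weight by (auto; lra).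
  pose proof (ln_distortion rho y 1 Hr Hy ltac:(lra)) as [W1 W2]. rewrite ln_1 in W1.
  pose proof (ln_min1 y Hy) as [U1 U2]. pose proof (ln_pos rho Hr) as Hl. pose proof ln2_pos.
  assert (Hreg' : ln rho + ln y <= ln 2 + a * ln rho).
  { apply ln_le in Hreg; [|nra]. rewrite (ln_mult rho y), (ln_mult 2), ln_Rpower in Hreg
      by (try lra; apply Rpower_pos). lra. }
  set (u := ln (min1 y)) in *. set (w := ln (/ (rho * y + 1))) in *.
  set (Y := ln y) in *. set (l := ln rho) in *.
  unfold exp_side_outage, min1. destruct (Rle_dec L 1).
  - rewrite Rmax_right by lra. destruct (Rle_dec (l + Y) 0); nra.
  - rewrite Rmax_left by lra. destruct (Rle_dec a 1).
    + rewrite Rmin_left by lra. destruct (Rle_dec Y 0); nra.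
    + rewrite Rmin_right by lra. destruct (Rle_dec Y 0); [destruct (Rle_dec (l + Y) 0)|]; nra.
Qed.

Lemma weight_bound_chan_outage rho L a y : 1 < rho -> 0 < L -> 0 <= a -> 0 < y ->
  (0 < a -> Rpower rho a / 2 <= rho * y) ->
  weight rho L 1 y <= exp (Rmax (1 - L) 0 * ln 2) * Rpower rho (- (min1 a + (1 - min1 a) * min1 L)).
Proof.
  intros Hr HL Ha Hy Hreg. apply le_of_ln; [apply weight_pos; auto; lra|]. rewrite ln_weight by (auto; lra).
  pose proof (ln_distortion rho y 1 Hr Hy ltac:(lra)) as [W1 W2]. rewrite ln_1 in W1.
  pose proof (ln_min1 y Hy) as [U1 U2]. pose proof (ln_pos rho Hr) as Hl. pose proof ln2_pos.
  assert (Hreg' : 0 < a -> min1 a * ln rho - ln 2 <= ln rho + ln y).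
  { intros Ha0. specialize (Hreg Ha0).
    assert (Hm : Rpower rho (min1 a) / 2 <= rho * y).
    { eapply Rle_trans; [|apply Hreg]. unfold Rdiv. apply Rmult_le_compat_r; [lra|].
      apply Rle_Rpower; [lra | apply Rmin_l]. }
    apply ln_le in Hm; [|unfold Rdiv; apply Rmult_lt_0_compat; [apply Rpower_pos | lra]].
    unfold Rdiv in Hm. rewrite (ln_mult rho y), (ln_mult (Rpower _ _)), ln_Rpower, ln_Rinv in Hm
      by (try lra; try apply Rpower_pos; apply Rinv_0_lt_compat; lra). lra. }
  assert (Hap : 0 <= min1 a <= 1) by (unfold min1; split; [apply Rmin_glb; lra | apply Rmin_r]).
  set (u := ln (min1 y)) in *. set (w := ln (/ (rho * y + 1))) in *.
  set (Y := ln y) in *. set (l := ln rho) in *.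
  set (a' := min1 a) in *. unfold min1 at 1.
  destruct (Rle_dec L 1).
  - rewrite (Rmin_left L), Rmax_left by lra.
    destruct (Rle_dec a 0).
    + assert (a' = 0) by (unfold a', min1; rewrite Rmin_left; lra). subst a'. rewrite H0.
      assert (0 <= (1 - L) * ln 2) by nra.
      destruct (Rle_dec (l + Y) 0); nra.
    + specialize (Hreg' ltac:(lra)). destruct (Rle_dec Y 0).
      * assert ((L - 1) * Y <= (L - 1) * (a' * l - ln 2 - l)) by nra. nra.
      * assert (0 <= (1 - a') * (1 - L) * l) by (apply Rmult_le_pos; nra). nra.
  - rewrite (Rmin_right L), Rmax_right, Rmult_0_l by lra.
    destruct (Rle_dec Y 0); [destruct (Rle_dec (l + Y) 0)|]; nra.
Qed.

Lemma weight_bound_success rho L a b y : 1 < rho -> 0 < L -> 0 <= a -> 0 < b -> 0 < y ->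
  weight rho L (Rpower rho (a + b)) y <= Rpower rho (- exp_success L a b).
Proof.
  intros Hr HL Ha Hb Hy. pose proof (Rpower_ge_1 rho (a + b) ltac:(lra) ltac:(lra)) as HB.
  replace (Rpower rho (- exp_success L a b)) with (exp 0 * Rpower rho (- exp_success L a b))
    by (rewrite exp_0; ring).
  apply le_of_ln; [apply weight_pos; auto|]. rewrite ln_weight by auto.
  pose proof (ln_distortion rho y _ Hr Hy HB) as [W1 W2]. rewrite ln_Rpower in W1.
  pose proof (ln_min1 y Hy) as [U1 U2]. pose proof (ln_pos rho Hr) as Hl.
  set (u := ln (min1 y)) in *. set (w := ln (/ (rho * y + Rpower rho (a + b)))) in *.
  set (Y := ln y) in *. set (l := ln rho) in *.
  unfold exp_success, min1. set (s := a + b) in *.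
  destruct (Rle_dec 1 s).
  - rewrite (Rmin_right s) by lra. nra.
  - rewrite (Rmin_left s) by lra. destruct (Rle_dec L 1).
    + rewrite Rmin_left by lra. destruct (Rle_dec 0 Y); [nra|].
      destruct (Rle_dec ((s - 1) * l) Y); [|nra].
      assert ((L - 1) * Y <= (L - 1) * ((s - 1) * l)) by nra. nra.
    + rewrite Rmin_right by lra. destruct (Rle_dec 0 Y); [nra|].
      destruct (Rle_dec ((s - 1) * l) Y); [nra|].
      assert (0 <= (L - 1) * (1 - s) * l) by (apply Rmult_le_pos; nra). nra.
Qed.

Lemma rho_gamma_crit_eq rho a b : 1 < rho -> 0 < b ->
  rho * gamma_crit rho a b = (Rpower rho (a + b) - Rpower rho b) / (Rpower rho b - 1).
Proof.
  intros Hr Hb. pose proof (chan_thr_gt_1 rho b Hr Hb). unfold gamma_crit, src_thr in *.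
  unfold chan_thr in *. rewrite Rpower_plus. field. split; apply Rgt_not_eq; lra.
Qed.

Lemma rho_gamma_crit_le rho a b : 1 < rho -> 0 < b -> 2 <= Rpower rho b ->
  rho * gamma_crit rho a b <= 2 * Rpower rho a.
Proof.
  intros Hr Hb H2. rewrite rho_gamma_crit_eq, Rpower_plus by auto.
  pose proof (Rpower_pos rho a). pose proof (Rpower_pos rho b).
  apply Rle_div_l; [lra|]. nra.
Qed.

Lemma rho_gamma_crit_ge rho a b : 1 < rho -> 0 <= a -> 0 < b -> Rpower rho a - 1 <= rho * gamma_crit rho a b.
Proof.
  intros Hr Ha Hb. pose proof (chan_thr_gt_1 rho b Hr Hb) as H. unfold chan_thr in H.
  rewrite rho_gamma_crit_eq, Rpower_plus by auto.
  pose proof (Rpower_pos rho a). pose proof (Rpower_ge_1 rho a ltac:(lra) Ha).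
  apply Rle_div_r; [lra|]. nra.
Qed.

Lemma gamma_crit_rs0 rho b : 1 < rho -> 0 < b -> gamma_crit rho 0 b = 0.
Proof.
  intros Hr Hb. pose proof (chan_thr_gt_1 rho b Hr Hb). unfold gamma_crit, src_thr, chan_thr in *.
  rewrite Rplus_0_l. unfold Rdiv. rewrite Rinv_r by (apply Rgt_not_eq; lra). ring.
Qed.

(** * Upper bound: ED_s = O((1 + ln rho) rho^(-exponent)) *)

Lemma cond_dist_weight_below Ls Lc rho a b y : 0 < Ls -> 0 < Lc -> 1 < rho -> 0 <= a -> 0 < b ->
  2 <= Rpower rho b -> 0 < y -> y <= gamma_crit rho a b ->
  cond_dist Lc rho a b y * Rpower (min1 y) Ls
  <= dens_mass Lc * exp (Rmax (Ls - 1) 0 * ln 2) * Rpower rho (- exponent Ls Lc a b).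
Proof.
  intros HLs HLc Hr Ha Hb Hb2 Hy Hg. pose proof (dens_mass_pos Lc HLc).
  destruct (Rle_dec a 0) as [Ha0|Ha0].
  { replace a with 0 in Hg by lra. rewrite gamma_crit_rs0 in Hg by auto. lra. }
  assert (Hreg : rho * y <= 2 * Rpower rho a)
    by (eapply Rle_trans; [apply Rmult_le_compat_l; [lra | apply Hg] | apply rho_gamma_crit_le; auto]).
  pose proof (weight_bound_side_outage rho Ls a y Hr HLs ltac:(lra) Hy Hreg) as P1.
  assert (Rpower rho (- exp_side_outage Ls a) <= Rpower rho (- exponent Ls Lc a b))
    by (apply Rle_Rpower; [lra|]; pose proof (exponent_le_side_outage Ls Lc a b ltac:(lra)); lra).
  unfold cond_dist. destruct Rle_dec; [|lra].
  replace (dens_mass Lc / (rho * y + 1) * Rpower (min1 y) Ls) with (dens_mass Lc * weight rho Ls 1 y)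
    by (unfold weight; field; nra).
  rewrite Rmult_assoc. apply Rmult_le_compat_l; [lra|].
  pose proof (exp_pos (Rmax (Ls - 1) 0 * ln 2)). eapply Rle_trans; [apply P1|]. nra.
Qed.

Lemma cond_dist_weight_above Ls Lc rho a b y KP : 0 < Ls -> 0 < Lc -> 1 < rho -> 0 <= a -> 0 < b ->
  0 <= KP -> P_out Lc rho b <= KP * Rpower rho (- outage_exp Lc b) ->
  (0 < a -> 2 <= Rpower rho a) -> 0 < y -> gamma_crit rho a b < y ->
  cond_dist Lc rho a b y * Rpower (min1 y) Ls
  <= (KP * exp (Rmax (1 - Ls) 0 * ln 2) + dens_mass Lc) * Rpower rho (- exponent Ls Lc a b).
Proof.
  intros HLs HLc Hr Ha Hb HKP HPl Ha2 Hy Hg.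
  assert (Hreg : 0 < a -> Rpower rho a / 2 <= rho * y).
  { intros Ha0. specialize (Ha2 Ha0). pose proof (rho_gamma_crit_ge rho a b Hr Ha Hb).
    assert (rho * gamma_crit rho a b < rho * y) by (apply Rmult_lt_compat_l; lra). lra. }
  pose proof (weight_bound_chan_outage rho Ls a y Hr HLs Ha Hy Hreg) as P2.
  pose proof (weight_bound_success rho Ls a b y Hr HLs Ha Hb Hy) as P3.
  pose proof (src_thr_ge_1 rho a b Hr Ha Hb).
  pose proof (P_out_range Lc rho b HLc Hr). pose proof (P_ok_range Lc rho b HLc Hr).
  pose proof (weight_pos rho Ls 1 y Hr Hy ltac:(lra)).
  pose proof (weight_pos rho Ls _ y Hr Hy H).
  pose proof (exp_pos (Rmax (1 - Ls) 0 * ln 2)). set (c := exp (Rmax (1 - Ls) 0 * ln 2)) in *.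
  set (E := Rpower rho (- exponent Ls Lc a b)) in *.
  assert (E2 : Rpower rho (- outage_exp Lc b) * Rpower rho (- (min1 a + (1 - min1 a) * min1 Ls)) <= E).
  { unfold E. rewrite <- Rpower_plus. apply Rle_Rpower; [lra|].
    pose proof (exponent_le_chan_outage Ls Lc a b) as HH. unfold exp_chan_outage in HH. lra. }
  assert (E3 : Rpower rho (- exp_success Ls a b) <= E)
    by (unfold E; apply Rle_Rpower; [lra|]; pose proof (exponent_le_success Ls Lc a b); lra).
  unfold cond_dist. destruct Rle_dec; [lra|].
  replace ((P_out Lc rho b / (rho * y + 1) + P_ok Lc rho b / (rho * y + src_thr rho a b))
           * Rpower (min1 y) Ls)
    with (P_out Lc rho b * weight rho Ls 1 y + P_ok Lc rho b * weight rho Ls (src_thr rho a b) y)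
    by (unfold weight; field; nra).
  assert (P_out Lc rho b * weight rho Ls 1 y <= KP * c * E).
  { eapply Rle_trans; [apply Rmult_le_compat; [lra | lra | apply HPl | apply P2]|].
    replace (KP * Rpower rho (- outage_exp Lc b) * (c * Rpower rho (- (min1 a + (1 - min1 a) * min1 Ls))))
      with (KP * c * (Rpower rho (- outage_exp Lc b) * Rpower rho (- (min1 a + (1 - min1 a) * min1 Ls))))
      by ring.
    apply Rmult_le_compat_l; [nra | exact E2]. }
  assert (P_ok Lc rho b * weight rho Ls (src_thr rho a b) y <= dens_mass Lc * E)
    by (apply Rmult_le_compat; [lra | left; apply weight_pos; auto | lra
                               | eapply Rle_trans; [apply P3 | exact E3]]).
  nra.
Qed.

Lemma cond_dist_weight_bound Ls Lc a b : 0 < Ls -> 0 < Lc -> 0 <= a -> 0 < b ->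
  exists CQ, 0 < CQ /\ for_large_rho (fun rho => forall y, 0 < y ->
    cond_dist Lc rho a b y * Rpower (min1 y) Ls <= CQ * Rpower rho (- exponent Ls Lc a b)).
Proof.
  intros HLs HLc Ha Hb.
  destruct (P_out_upper Lc b HLc Hb) as (KP & HKP & HPl).
  pose proof (dens_mass_pos Lc HLc) as HN.
  set (c1 := exp (Rmax (Ls - 1) 0 * ln 2)). set (c2 := exp (Rmax (1 - Ls) 0 * ln 2)).
  assert (0 < c1) by apply exp_pos. assert (0 < c2) by apply exp_pos.
  assert (Ha2 : for_large_rho (fun rho => 0 < a -> 2 <= Rpower rho a)).
  { destruct (Rle_dec a 0).
    - apply for_large_rho_of_gt_2. intros; lra.
    - apply (for_large_rho_mono _ _ (for_large_rho_Rpower a 2 ltac:(lra))). auto. }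
  exists (dens_mass Lc * c1 + (KP * c2 + dens_mass Lc)). split; [nra|].
  apply (for_large_rho_mono _ _ (for_large_rho_and _ _ Ha2 (for_large_rho_Rpower b 2 Hb))).
  intros rho Hr [Hra Hrb] y Hy.
  pose proof (Rpower_pos rho (- exponent Ls Lc a b)) as HE.
  assert (0 <= dens_mass Lc * c1) by nra. assert (0 <= KP * c2 + dens_mass Lc) by nra.
  destruct (Rle_dec y (gamma_crit rho a b)) as [Hg|Hg].
  - pose proof (cond_dist_weight_below Ls Lc rho a b y HLs HLc Hr Ha Hb Hrb Hy Hg) as Hbd.
    fold c1 in Hbd. nra.
  - pose proof (cond_dist_weight_above Ls Lc rho a b y KP HLs HLc Hr Ha Hb ltac:(lra)
                  (HPl rho Hr) Hra Hy ltac:(lra)) as Hbd.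
    fold c2 in Hbd. nra.
Qed.

Lemma dens_weighted_bound L : 0 < L -> exists Kt, 0 < Kt /\
  forall (phi : R -> R) M Q x, 0 <= M -> 0 <= Q -> 0 < x <= 1 ->
    tame (fun y => phi y * dens L y) -> (forall y, 0 < y -> 0 <= phi y <= M) ->
    (forall y, 0 < y -> phi y * Rpower (min1 y) L <= Q) ->
    Int0inf (fun y => phi y * dens L y)
    <= M * dens_const L * Rpower x L / L + dens_const L * Q * (- ln x) + Kt * Q.
Proof.
  intros HL. destruct (dens_tail L HL) as (Kt & HKt & HKtb).
  exists Kt. split; auto. intros phi M Q x HM HQ Hx HG Hphi HQb.
  pose proof (dens_const_pos L HL).
  apply Int0inf_three_regimes; auto; try nra.
  - intros y Hy. pose proof (Hphi y ltac:(lra)). pose proof (dens_le_power L y HL ltac:(lra)).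
    pose proof (dens_pos L y HL ltac:(lra)).
    rewrite Rmult_assoc. apply Rmult_le_compat; lra.
  - intros y Hy. specialize (HQb y ltac:(lra)). pose proof (Hphi y ltac:(lra)).
    pose proof (dens_le_power L y HL ltac:(lra)).
    unfold min1 in HQb. rewrite Rmin_left, (Rpower_succ_pred y L) in HQb by lra.
    apply Rle_trans with (dens_const L * (phi y * (y * Rpower y (L - 1)))); [|nra].
    replace (dens_const L * (phi y * (y * Rpower y (L - 1))))
      with (y * (phi y * (dens_const L * Rpower y (L - 1)))) by ring.
    apply Rmult_le_compat_l; [lra|]. apply Rmult_le_compat_l; lra.
  - intros y Hy. specialize (HQb y ltac:(lra)). pose proof (Hphi y ltac:(lra)).
    unfold min1 in HQb. rewrite Rmin_right, Rpower_one_l, Rmult_1_r in HQb by lra.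
    eapply Rle_trans; [apply Rmult_le_compat_l; [lra | apply HKtb; lra]|].
    assert (0 <= Kt / (y * y)) by (apply Rdiv_le_0_compat; nra).
    unfold Rdiv in *. replace (Kt * Q * / (y * y)) with (Q * (Kt * / (y * y))) by ring.
    apply Rmult_le_compat_r; lra.
Qed.

(* Cutting at x = rho^(-(d/Ls + 1)) in [dens_weighted_bound] gives the upper bound. *)
Lemma ED_upper Ls Lc a b : 0 < Ls -> 0 < Lc -> 0 <= a -> 0 < b ->
  exists CU, 0 < CU /\ for_large_rho (fun rho =>
    ED_red Ls Lc rho a b <= CU * (1 + ln rho) * Rpower rho (- exponent Ls Lc a b)).
Proof.
  intros HLs HLc Ha Hb.
  destruct (cond_dist_weight_bound Ls Lc a b HLs HLc Ha Hb) as (CQ & HCQ & HQ).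
  destruct (dens_weighted_bound Ls HLs) as (Kt & HKt & Hint).
  pose proof (exponent_pos Ls Lc a b HLs HLc Ha Hb) as Hd.
  set (d := exponent Ls Lc a b) in *. set (N := d / Ls + 1).
  assert (HN : 0 < N) by (unfold N; assert (0 < d / Ls) by (apply Rdiv_lt_0_compat; auto); lra).
  pose proof (dens_const_pos Ls HLs). pose proof (dens_mass_pos Lc HLc).
  set (C0 := 3 * dens_mass Lc * dens_const Ls / Ls).
  assert (HC0 : 0 < C0) by (unfold C0; apply Rdiv_lt_0_compat; nra).
  assert (0 < dens_const Ls * CQ * N) by (repeat apply Rmult_lt_0_compat; auto).
  exists (C0 + dens_const Ls * CQ * N + Kt * CQ). split; [nra|].
  apply (for_large_rho_mono _ _ HQ). intros rho Hr HQr.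
  pose proof (ln_pos rho Hr) as Hl. pose proof (Rpower_pos rho (- d)) as HE.
  set (x := Rpower rho (- N)).
  assert (Hx : 0 < x <= 1) by (split; [apply Rpower_pos | apply Rpower_le_1; lra]).
  eapply Rle_trans.
  { apply (Hint _ (3 * dens_mass Lc) (CQ * Rpower rho (- d)) x); try nra; auto.
    - apply tame_outer; auto; lra.
    - intros y Hy. apply cond_dist_range; auto. }
  assert (Hxl : Rpower x Ls <= Rpower rho (- d)).
  { unfold x. rewrite Rpower_mult. apply Rle_Rpower; [lra|].
    unfold N. replace (- (d / Ls + 1) * Ls) with (- d - Ls) by (field; lra). lra. }
  assert (Hlx : - ln x = N * ln rho) by (unfold x; rewrite ln_Rpower; ring).
  rewrite Hlx.
  replace (3 * dens_mass Lc * dens_const Ls * Rpower x Ls / Ls) with (C0 * Rpower x Ls)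
    by (unfold C0; field; lra).
  set (E := Rpower rho (- d)) in *. set (l := ln rho) in *.
  assert (C0 * Rpower x Ls <= C0 * E) by (apply Rmult_le_compat_l; lra).
  assert (0 <= C0 * E) by (apply Rmult_le_pos; lra).
  assert (0 <= C0 * E * l) by (apply Rmult_le_pos; lra).
  assert (0 <= Kt * CQ) by (apply Rmult_le_pos; lra).
  assert (0 <= Kt * CQ * E) by (apply Rmult_le_pos; lra).
  assert (0 <= Kt * CQ * E * l) by (apply Rmult_le_pos; lra).
  assert (0 <= dens_const Ls * CQ * N * E) by (apply Rmult_le_pos; lra).
  replace ((C0 + dens_const Ls * CQ * N + Kt * CQ) * (1 + l) * E) with
    (C0 * E + C0 * E * l + dens_const Ls * CQ * N * E + dens_const Ls * (CQ * E) * (N * l)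
     + Kt * (CQ * E) + Kt * CQ * E * l) by ring.
  lra.
Qed.

(** * Lower bound: ED_s >= c rho^(-exponent) *)

(* Boxes [x, 2x] with x = rho^(g-1) pick out the contribution of
   gamma0 ~ rho^(g-1), which has probability ~ rho^(-(g-1) Ls). *)
Lemma ED_ge_box Ls Lc rho a b x m : 0 < Ls -> 0 < Lc -> 1 < rho -> 0 <= a -> 0 < b ->
  0 < x <= 4 -> 0 <= m -> (forall y, x < y < 2 * x -> m <= cond_dist Lc rho a b y) ->
  m * box_const Ls * Rpower x Ls <= ED_red Ls Lc rho a b.
Proof. intros. apply Int0inf_ge_box_dens; auto. apply tame_outer; auto. Qed.

Lemma Rpower_scale_box rho g Ls c : 0 < c ->
  Rpower (c * Rpower rho (g - 1)) Ls = Rpower c Ls * Rpower rho ((g - 1) * Ls).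
Proof. intros. rewrite <- Rpower_mult_distr, Rpower_mult by (auto using Rpower_pos). reflexivity. Qed.

Lemma ED_ge_side_outage_at Ls Lc rho a b g : 0 < Ls -> 0 < Lc -> 1 < rho -> 0 < a -> 0 < b ->
  2 <= Rpower rho a -> 0 <= g <= min1 a ->
  dens_mass Lc / 2 * box_const Ls * Rpower (/ 4) Ls * Rpower rho (- (Ls * (1 - g) + g))
  <= ED_red Ls Lc rho a b.
Proof.
  intros HLs HLc Hr Ha Hb HEa Hg.
  pose proof (min1_range a ltac:(lra)) as [[Hap1 Hap2] Hap3].
  pose proof (dens_mass_pos Lc HLc) as HN. pose proof (Rpower_pos rho (g - 1)).
  set (x := / 4 * Rpower rho (g - 1)).
  assert (HE1 : Rpower rho (g - 1) <= 1) by (apply Rpower_le_1; lra).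
  assert (Hx : 0 < x <= 4) by (unfold x; split; lra).
  pose proof (Rpower_ge_1 rho g ltac:(lra) ltac:(lra)) as HEg.
  assert (HEga : Rpower rho g <= Rpower rho a) by (apply Rle_Rpower; lra).
  pose proof (Rpower_pos rho (- g)).
  eapply Rle_trans; [|apply (ED_ge_box Ls Lc rho a b x (dens_mass Lc / 2 * Rpower rho (- g))); auto; try nra].
  - unfold x. rewrite Rpower_scale_box by lra.
    replace (- (Ls * (1 - g) + g)) with (- g + (g - 1) * Ls) by ring. rewrite Rpower_plus.
    right; ring.
  - intros y Hy. pose proof (rho_gamma_crit_ge rho a b Hr ltac:(lra) Hb).
    assert (Hry : rho * y < Rpower rho g / 2)
      by (rewrite (Rpower_succ_pred rho g) by lra; unfold x in Hy; nra).
    unfold cond_dist. destruct Rle_dec as [Hgc|Hgc].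
    + rewrite Rpower_Ropp. unfold Rdiv.
      apply Rle_trans with (dens_mass Lc * / (2 * Rpower rho g)); [right; field; lra|].
      apply Rmult_le_compat_l; [lra|]. apply Rinv_le_contravar; nra.
    + exfalso. apply Hgc. apply (Rmult_le_reg_l rho); lra.
Qed.

Lemma ED_ge_chan_outage_at Ls Lc rho a b g kP : 0 < Ls -> 0 < Lc -> 1 < rho -> 0 <= a -> 0 < b ->
  2 <= Rpower rho b -> a <= g <= 1 -> 0 <= kP ->
  kP * Rpower rho (- outage_exp Lc b) <= P_out Lc rho b ->
  kP / 9 * box_const Ls * Rpower 4 Ls * Rpower rho (- (outage_exp Lc b + g + Ls * (1 - g)))
  <= ED_red Ls Lc rho a b.
Proof.
  intros HLs HLc Hr Ha Hb HA Hg HkP HPl.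
  pose proof (P_ok_range Lc rho b HLc Hr). pose proof (src_thr_ge_1 rho a b Hr Ha Hb).
  pose proof (Rpower_pos rho (g - 1)).
  set (x := 4 * Rpower rho (g - 1)).
  assert (HE1 : Rpower rho (g - 1) <= 1) by (apply Rpower_le_1; lra).
  assert (Hx : 0 < x <= 4) by (unfold x; split; lra).
  pose proof (Rpower_ge_1 rho g ltac:(lra) ltac:(lra)) as HEg.
  assert (HEga : Rpower rho a <= Rpower rho g) by (apply Rle_Rpower; lra).
  pose proof (Rpower_pos rho (- outage_exp Lc b)) as HP. pose proof (Rpower_pos rho (- g)) as HPg.
  assert (0 <= kP / 9 * Rpower rho (- outage_exp Lc b)) by (apply Rmult_le_pos; lra).
  eapply Rle_trans;
    [|apply (ED_ge_box Ls Lc rho a b x (kP / 9 * Rpower rho (- outage_exp Lc b) * Rpower rho (- g)));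
      auto; try nra].
  - unfold x. rewrite Rpower_scale_box by lra.
    replace (- (outage_exp Lc b + g + Ls * (1 - g))) with (- outage_exp Lc b + - g + (g - 1) * Ls) by ring.
    rewrite !Rpower_plus. right; field.
  - intros y Hy. pose proof (rho_gamma_crit_le rho a b Hr Hb HA).
    assert (Hry : 4 * Rpower rho g < rho * y < 8 * Rpower rho g)
      by (rewrite (Rpower_succ_pred rho g) by lra; unfold x in Hy; split; nra).
    unfold cond_dist. destruct Rle_dec as [Hgc|Hgc].
    + exfalso. assert (rho * y <= rho * gamma_crit rho a b) by (apply Rmult_le_compat_l; lra). lra.
    + assert (0 <= P_ok Lc rho b / (rho * y + src_thr rho a b)) by (apply Rdiv_le_0_compat; lra).
      assert (kP / 9 * Rpower rho (- outage_exp Lc b) * Rpower rho (- g) <= P_out Lc rho b / (rho * y + 1)).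
      { rewrite Rpower_Ropp with (y := g). unfold Rdiv.
        apply Rle_trans with (P_out Lc rho b * / (9 * Rpower rho g)).
        - replace (kP * / 9 * Rpower rho (- outage_exp Lc b) * / Rpower rho g)
            with ((kP * Rpower rho (- outage_exp Lc b)) * / (9 * Rpower rho g)) by (field; lra).
          apply Rmult_le_compat_r; [left; apply Rinv_0_lt_compat; lra | auto].
        - apply Rmult_le_compat_l; [pose proof (P_out_range Lc rho b HLc Hr); lra|].
          apply Rinv_le_contravar; lra. }
      lra.
Qed.

Lemma ED_ge_success_at Ls Lc rho a b g : 0 < Ls -> 0 < Lc -> 1 < rho -> 0 <= a -> 0 < b -> b <= 1 ->
  2 <= Rpower rho b -> a <= g <= 1 ->
  box_const Lc / 9 * box_const Ls * Rpower 4 Ls * Rpower rho (- (Rmax g (a + b) + Ls * (1 - g)))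
  <= ED_red Ls Lc rho a b.
Proof.
  intros HLs HLc Hr Ha Hb Hb1 HA Hg.
  pose proof (P_ok_lower Lc b HLc Hb Hb1 rho Hr) as HPg. pose proof (box_const_pos Lc HLc).
  pose proof (P_out_range Lc rho b HLc Hr). pose proof (Rpower_pos rho (g - 1)).
  set (x := 4 * Rpower rho (g - 1)).
  assert (HE1 : Rpower rho (g - 1) <= 1) by (apply Rpower_le_1; lra).
  assert (Hx : 0 < x <= 4) by (unfold x; split; lra).
  pose proof (Rpower_ge_1 rho g ltac:(lra) ltac:(lra)) as HEg.
  assert (HEga : Rpower rho a <= Rpower rho g) by (apply Rle_Rpower; lra).
  set (mx := Rmax g (a + b)).
  assert (HEm1 : Rpower rho g <= Rpower rho mx) by (apply Rle_Rpower; [lra | apply Rmax_l]).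
  assert (HEm2 : Rpower rho (a + b) <= Rpower rho mx) by (apply Rle_Rpower; [lra | apply Rmax_r]).
  pose proof (Rpower_pos rho (- mx)) as HPm. pose proof (Rpower_pos rho mx).
  eapply Rle_trans; [|apply (ED_ge_box Ls Lc rho a b x (box_const Lc / 9 * Rpower rho (- mx))); auto; try nra].
  - unfold x. rewrite Rpower_scale_box by lra.
    replace (- (mx + Ls * (1 - g))) with (- mx + (g - 1) * Ls) by ring. rewrite !Rpower_plus.
    right; field.
  - intros y Hy. pose proof (rho_gamma_crit_le rho a b Hr Hb HA).
    assert (Hry : 4 * Rpower rho g < rho * y < 8 * Rpower rho g)
      by (rewrite (Rpower_succ_pred rho g) by lra; unfold x in Hy; split; nra).
    unfold cond_dist. destruct Rle_dec as [Hgc|Hgc].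
    + exfalso. assert (rho * y <= rho * gamma_crit rho a b) by (apply Rmult_le_compat_l; lra). lra.
    + assert (0 <= P_out Lc rho b / (rho * y + 1)) by (apply Rdiv_le_0_compat; lra).
      assert (box_const Lc / 9 * Rpower rho (- mx) <= P_ok Lc rho b / (rho * y + src_thr rho a b)).
      { rewrite Rpower_Ropp. unfold src_thr, Rdiv.
        apply Rle_trans with (box_const Lc * / (9 * Rpower rho mx)); [right; field; lra|].
        apply Rmult_le_compat; [lra | left; apply Rinv_0_lt_compat; lra | auto|].
        apply Rinv_le_contravar; [pose proof (Rpower_pos rho (a + b)); nra | lra]. }
      lra.
Qed.

(* Choosing the scale g optimally in each regime. *)
Lemma ED_ge_side_outage Ls Lc a b : 0 < Ls -> 0 < Lc -> 0 < a -> 0 < b ->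
  exists c, 0 < c /\ for_large_rho (fun rho =>
    c * Rpower rho (- exp_side_outage Ls a) <= ED_red Ls Lc rho a b).
Proof.
  intros HLs HLc Ha Hb. pose proof (min1_range a ltac:(lra)) as [[? ?] ?].
  pose proof (dens_mass_pos Lc HLc). pose proof (box_const_pos Ls HLs). pose proof (Rpower_pos (/ 4) Ls).
  exists (dens_mass Lc / 2 * box_const Ls * Rpower (/ 4) Ls). split.
  { apply Rmult_lt_0_compat; [apply Rmult_lt_0_compat|]; auto. apply Rdiv_lt_0_compat; lra. }
  apply (for_large_rho_mono _ _ (for_large_rho_Rpower a 2 Ha)). intros rho Hr HEa.
  unfold exp_side_outage. destruct (Rle_dec Ls 1).
  - rewrite Rmax_right by lra. replace (Ls - min1 a * 0) with (Ls * (1 - 0) + 0) by ring.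
    apply ED_ge_side_outage_at; auto. lra.
  - rewrite Rmax_left by lra. replace (Ls - min1 a * (Ls - 1)) with (Ls * (1 - min1 a) + min1 a) by ring.
    apply ED_ge_side_outage_at; auto. lra.
Qed.

Lemma ED_ge_chan_outage Ls Lc a b : 0 < Ls -> 0 < Lc -> 0 <= a -> a <= 1 -> 0 < b ->
  exists c, 0 < c /\ for_large_rho (fun rho =>
    c * Rpower rho (- exp_chan_outage Ls Lc a b) <= ED_red Ls Lc rho a b).
Proof.
  intros HLs HLc Ha Ha1 Hb.
  destruct (P_out_lower Lc b HLc Hb) as (kP & HkP & HPl).
  pose proof (box_const_pos Ls HLs). pose proof (Rpower_pos 4 Ls).
  exists (kP / 9 * box_const Ls * Rpower 4 Ls). split.
  { apply Rmult_lt_0_compat; [apply Rmult_lt_0_compat|]; auto. apply Rdiv_lt_0_compat; lra. }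
  apply (for_large_rho_mono _ _ (for_large_rho_and _ _ HPl (for_large_rho_Rpower b 2 Hb))).
  intros rho Hr [HPr Hrb].
  unfold exp_chan_outage, min1. rewrite (Rmin_left a) by lra.
  destruct (Rle_dec Ls 1).
  - rewrite Rmin_left by lra.
    replace (outage_exp Lc b + a + (1 - a) * Ls) with (outage_exp Lc b + a + Ls * (1 - a)) by ring.
    apply ED_ge_chan_outage_at; auto; lra.
  - rewrite Rmin_right by lra.
    replace (outage_exp Lc b + a + (1 - a) * 1) with (outage_exp Lc b + 1 + Ls * (1 - 1)) by ring.
    apply ED_ge_chan_outage_at; auto; lra.
Qed.

Lemma ED_ge_success Ls Lc a b : 0 < Ls -> 0 < Lc -> 0 <= a -> a <= 1 -> 0 < b -> b <= 1 ->
  exists c, 0 < c /\ for_large_rho (fun rho =>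
    c * Rpower rho (- exp_success Ls a b) <= ED_red Ls Lc rho a b).
Proof.
  intros HLs HLc Ha Ha1 Hb Hb1.
  pose proof (box_const_pos Ls HLs). pose proof (box_const_pos Lc HLc). pose proof (Rpower_pos 4 Ls).
  exists (box_const Lc / 9 * box_const Ls * Rpower 4 Ls). split.
  { apply Rmult_lt_0_compat; [apply Rmult_lt_0_compat|]; auto. apply Rdiv_lt_0_compat; lra. }
  apply (for_large_rho_mono _ _ (for_large_rho_Rpower b 2 Hb)). intros rho Hr Hrb.
  unfold exp_success, min1.
  destruct (Rle_dec 1 (a + b)).
  - rewrite (Rmin_right (a + b)) by lra.
    replace (a + b + (1 - 1) * Rmin Ls 1) with (Rmax 1 (a + b) + Ls * (1 - 1))
      by (rewrite Rmax_right by lra; ring).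
    apply ED_ge_success_at; auto; lra.
  - rewrite (Rmin_left (a + b)) by lra. destruct (Rle_dec Ls 1).
    + rewrite Rmin_left by lra.
      replace (a + b + (1 - (a + b)) * Ls) with (Rmax (a + b) (a + b) + Ls * (1 - (a + b)))
        by (rewrite Rmax_left by lra; ring).
      apply ED_ge_success_at; auto; lra.
    + rewrite Rmin_right by lra.
      replace (a + b + (1 - (a + b)) * 1) with (Rmax 1 (a + b) + Ls * (1 - 1))
        by (rewrite Rmax_left by lra; ring).
      apply ED_ge_success_at; auto; lra.
Qed.

Lemma Rmin_eq_l_or_r x y : Rmin x y = x \/ Rmin x y = y.
Proof. unfold Rmin. destruct Rle_dec; auto. Qed.

Lemma exponent_realised Ls Lc a b : 0 < Ls -> 0 < Lc -> 0 <= a -> 0 < b ->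
  (0 < a /\ exp_side_outage Ls a <= exponent Ls Lc a b) \/
  (a <= 1 /\ exp_chan_outage Ls Lc a b <= exponent Ls Lc a b) \/
  (a <= 1 /\ b <= 1 /\ exp_success Ls a b <= exponent Ls Lc a b).
Proof.
  intros HLs HLc Ha Hb.
  pose proof (min1_range a Ha) as [[? ?] ?]. pose proof (min1_pos Ls HLs) as [[? ?] ?].
  set (side := exp_side_outage Ls a). set (chan := exp_chan_outage Ls Lc a b).
  set (succ := exp_success Ls a b).
  destruct (Rle_dec a 1) as [Ha1|Ha1].
  - (* for b > 1 the outage exponent vanishes, so chan <= 1 <= succ *)
    assert (Hb1 : b <= 1 \/ chan <= succ).
    { destruct (Rle_dec b 1) as [|Hb1]; [left; lra | right].
      unfold chan, succ, exp_chan_outage, exp_success, outage_exp.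
      replace (min1 (a + b)) with 1 by (unfold min1; rewrite Rmin_right; lra).
      rewrite Rmax_right by lra. nra. }
    assert (Hpair : (chan <= Rmin chan succ /\ (a <= 1)) \/ (b <= 1 /\ succ <= Rmin chan succ)).
    { destruct (Rmin_eq_l_or_r chan succ) as [E|E]; rewrite E; [left; split; lra|].
      destruct Hb1 as [Hb1|Hcs]; [right; split; lra | left; split; [rewrite <- E; apply Rmin_glb|]; lra]. }
    unfold exponent. fold side chan succ. destruct (Rle_dec a 0).
    + destruct Hpair as [[? ?]|[? ?]]; [right; left | right; right]; repeat split; lra.
    + destruct (Rmin_eq_l_or_r side (Rmin chan succ)) as [E|E]; rewrite E; [left; split; lra|].
      destruct Hpair as [[? ?]|[? ?]]; [right; left | right; right]; repeat split; lra.
  - left. split; [lra|].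
    assert (Hap1 : min1 a = 1) by (unfold min1; rewrite Rmin_right; lra).
    assert (E1 : side = min1 Ls).
    { unfold side, exp_side_outage. rewrite Hap1. unfold min1.
      destruct (Rle_dec Ls 1); [rewrite Rmax_right, Rmin_left by lra | rewrite Rmax_left, Rmin_right by lra]; ring. }
    assert (side <= chan).
    { unfold chan, exp_chan_outage, outage_exp. rewrite Hap1, <- E1.
      assert (0 <= Lc * Rmax (1 - b) 0) by (apply Rmult_le_pos; [lra | apply Rmax_r]). lra. }
    assert (side <= succ).
    { unfold succ, exp_success. rewrite E1.
      replace (min1 (a + b)) with 1 by (unfold min1; rewrite Rmin_right; lra). lra. }
    unfold exponent. fold side chan succ. destruct (Rle_dec a 0); [lra|].
    apply Rmin_glb; [lra | apply Rmin_glb; lra].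
Qed.

Lemma ED_lower Ls Lc a b : 0 < Ls -> 0 < Lc -> 0 <= a -> 0 < b ->
  exists c, 0 < c /\ for_large_rho (fun rho =>
    c * Rpower rho (- exponent Ls Lc a b) <= ED_red Ls Lc rho a b).
Proof.
  intros HLs HLc Ha Hb.
  assert (Hweaken : forall e c, e <= exponent Ls Lc a b -> 0 < c ->
    for_large_rho (fun rho => c * Rpower rho (- e) <= ED_red Ls Lc rho a b) ->
    for_large_rho (fun rho => c * Rpower rho (- exponent Ls Lc a b) <= ED_red Ls Lc rho a b)).
  { intros e c He Hc H. apply (for_large_rho_mono _ _ H). intros rho Hr Hle.
    eapply Rle_trans; [|apply Hle]. apply Rmult_le_compat_l; [lra|]. apply Rle_Rpower; lra. }
  destruct (exponent_realised Ls Lc a b HLs HLc Ha Hb) as [[Ha0 He]|[[Ha1 He]|(Ha1 & Hb1 & He)]].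
  - destruct (ED_ge_side_outage Ls Lc a b HLs HLc Ha0 Hb) as (c & Hc & H). eauto.
  - destruct (ED_ge_chan_outage Ls Lc a b HLs HLc Ha Ha1 Hb) as (c & Hc & H). eauto.
  - destruct (ED_ge_success Ls Lc a b HLs HLc Ha Ha1 Hb Hb1) as (c & Hc & H). eauto.
Qed.

(** * Optimising the exponent over the rates *)

Lemma Rmin_le_convex x y l : 0 <= l <= 1 -> Rmin x y <= l * x + (1 - l) * y.
Proof. intros. destruct (Rle_dec x y); [rewrite Rmin_left | rewrite Rmin_right]; nra. Qed.

(* Ls <= 1: with rs = 0 the exponent is a min of two lines in rc, bounded by
   their value at the crossing point; for rs > 0 it is at most
   exp_side_outage = Ls. *)
Lemma exponent_le_Delta_small Ls Lc a b : 0 < Ls <= 1 -> 0 < Lc -> 0 <= a -> 0 < b ->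
  exponent Ls Lc a b <= 1 - (1 - Ls) ^ 2 / (Lc + 1 - Ls).
Proof.
  intros [HL HL1] HM Ha Hb. assert (Hden : 0 < Lc + 1 - Ls) by lra.
  assert (HmL : min1 Ls = Ls) by (unfold min1; rewrite Rmin_left; lra).
  assert (Hgap : Ls <= 1 - (1 - Ls) ^ 2 / (Lc + 1 - Ls)).
  { assert (0 <= (1 - Ls) * Lc / (Lc + 1 - Ls)) by (apply Rdiv_le_0_compat; nra).
    replace (1 - (1 - Ls) ^ 2 / (Lc + 1 - Ls)) with (Ls + (1 - Ls) * Lc / (Lc + 1 - Ls)) by (field; lra).
    lra. }
  destruct (Rle_dec a 0) as [Ha0|Ha0].
  - assert (a = 0) by lra. subst a.
    assert (Hap : min1 0 = 0) by (unfold min1; rewrite Rmin_left; lra).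
    pose proof (exponent_le_chan_outage Ls Lc 0 b) as H2. pose proof (exponent_le_success Ls Lc 0 b) as H3.
    unfold exp_chan_outage, exp_success, outage_exp in *. rewrite Hap, HmL, Rplus_0_l in *.
    destruct (Rle_dec 1 b).
    + rewrite Rmax_right in H2 by lra. lra.
    + rewrite Rmax_left in H2 by lra. unfold min1 in H3. rewrite (Rmin_left b 1) in H3 by lra.
      set (l := (1 - Ls) / (Lc + 1 - Ls)).
      assert (Hl : 0 <= l <= 1).
      { unfold l. split; [apply Rdiv_le_0_compat; lra|]. apply Rle_div_l; lra. }
      apply Rle_trans with (Rmin (Lc * (1 - b) + 0 + (1 - 0) * Ls) (b + (1 - b) * Ls)).
      * apply Rmin_glb; lra.
      * eapply Rle_trans; [apply (Rmin_le_convex _ _ l Hl)|]. right. unfold l. field. lra.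
  - pose proof (exponent_le_side_outage Ls Lc a b ltac:(lra)) as H1.
    unfold exp_side_outage in H1. rewrite Rmax_right in H1 by lra. lra.
Qed.

(* Ls > 1: a positive combination (weights t/(Ls-1), t/Lc, t summing to 1)
   of the three exponents is the constant Delta, so their min is at most Delta. *)
Lemma exponent_le_Delta_large Ls Lc a b : 1 < Ls -> 0 < Lc -> 0 <= a -> 0 < b ->
  exponent Ls Lc a b <= (Ls * (2 * Lc + 1) - Lc - 1) / (Ls * (Lc + 1) - 1).
Proof.
  intros HL1 HM Ha Hb. assert (HD : 0 < Ls * (Lc + 1) - 1) by nra.
  assert (HmL : min1 Ls = 1) by (unfold min1; rewrite Rmin_right; lra).
  assert (HDel1 : 1 <= (Ls * (2 * Lc + 1) - Lc - 1) / (Ls * (Lc + 1) - 1)) by (apply Rle_div_r; nra).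
  pose proof (exponent_le_chan_outage Ls Lc a b) as Hdd2. pose proof (exponent_le_success Ls Lc a b) as Hdd3.
  unfold exp_chan_outage, outage_exp in Hdd2. unfold exp_success in Hdd3. rewrite HmL in Hdd2, Hdd3.
  destruct (Rle_dec 1 b) as [Hb1|Hb1].
  { rewrite Rmax_right in Hdd2 by lra. lra. }
  destruct (Rle_dec (a + b) 1) as [Hs1|Hs1].
  { unfold min1 in Hdd3. rewrite Rmin_left in Hdd3 by lra. lra. }
  unfold min1 in Hdd3. rewrite Rmin_right in Hdd3 by lra. rewrite Rmax_left in Hdd2 by lra.
  destruct (Rle_dec a 0) as [Ha0|Ha0].
  { assert (a = 0) by lra. subst a. unfold min1 in Hdd2. rewrite Rmin_left in Hdd2 by lra. lra. }
  pose proof (exponent_le_side_outage Ls Lc a b ltac:(lra)) as Hdd1.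
  unfold exp_side_outage in Hdd1. rewrite Rmax_left in Hdd1 by lra.
  destruct (Rle_dec 1 a) as [Ha1|Ha1].
  { unfold min1 in Hdd1. rewrite Rmin_right in Hdd1 by lra. lra. }
  assert (Hap : min1 a = a) by (unfold min1; rewrite Rmin_left; lra).
  rewrite Hap in Hdd1, Hdd2.
  set (D := Ls * (Lc + 1) - 1) in *. set (d := exponent Ls Lc a b) in *.
  set (t := Lc * (Ls - 1) / D).
  assert (Ht : 0 < t) by (unfold t; apply Rdiv_lt_0_compat; nra).
  assert (E : t / (Ls - 1) * (Ls - a * (Ls - 1)) + t / Lc * (Lc * (1 - b) + a + (1 - a) * 1)
              + t * (a + b + (1 - 1) * 1) = (Ls * (2 * Lc + 1) - Lc - 1) / D)
    by (unfold t, D; field; repeat split; intro; nra).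
  assert (Es : t / (Ls - 1) + t / Lc + t = 1) by (unfold t, D; field; repeat split; intro; nra).
  assert (0 < t / (Ls - 1)) by (apply Rdiv_lt_0_compat; lra).
  assert (0 < t / Lc) by (apply Rdiv_lt_0_compat; lra).
  rewrite <- E. nra.
Qed.

Lemma exponent_le_Delta Ls Lc a b : 0 < Ls -> 0 < Lc -> 0 <= a -> 0 < b ->
  exponent Ls Lc a b <= Delta_formula Ls Lc.
Proof.
  intros. unfold Delta_formula. destruct (Rle_dec Ls 1).
  - apply exponent_le_Delta_small; auto.
  - apply exponent_le_Delta_large; auto; lra.
Qed.

(* The optimal rates: rs = 0, rc = Lc/(Lc+1-Ls) when Ls <= 1, and the point
   where all three exponents coincide when Ls > 1. *)
Lemma exponent_attains_Delta_small Ls Lc : 0 < Ls <= 1 -> 0 < Lc ->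
  exponent Ls Lc 0 (Lc / (Lc + 1 - Ls)) = 1 - (1 - Ls) ^ 2 / (Lc + 1 - Ls).
Proof.
  intros [HL HL1] HM. assert (Hden : 0 < Lc + 1 - Ls) by lra.
  assert (Hb1 : Lc / (Lc + 1 - Ls) <= 1) by (apply Rle_div_l; lra).
  assert (HmL : min1 Ls = Ls) by (unfold min1; rewrite Rmin_left; lra).
  assert (Hap : min1 0 = 0) by (unfold min1; rewrite Rmin_left; lra).
  unfold exponent. destruct (Rle_dec 0 0); [|lra].
  unfold exp_chan_outage, exp_success, outage_exp. rewrite Hap, HmL, Rplus_0_l, Rmax_left by lra.
  unfold min1. rewrite (Rmin_left (Lc / _)) by lra.
  replace (Lc * (1 - Lc / (Lc + 1 - Ls)) + 0 + (1 - 0) * Ls) with (1 - (1 - Ls) ^ 2 / (Lc + 1 - Ls))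
    by (field; lra).
  replace (Lc / (Lc + 1 - Ls) + (1 - Lc / (Lc + 1 - Ls)) * Ls) with (1 - (1 - Ls) ^ 2 / (Lc + 1 - Ls))
    by (field; lra).
  apply Rmin_left. lra.
Qed.

Lemma exponent_attains_Delta_large Ls Lc : 1 < Ls -> 0 < Lc ->
  let D := Ls * (Lc + 1) - 1 in
  0 < 1 - Lc / D /\
  exponent Ls Lc (1 - Lc / D) (Ls * Lc / D) = (Ls * (2 * Lc + 1) - Lc - 1) / D.
Proof.
  intros HL1 HM D. assert (HD : 0 < D) by (unfold D; nra).
  set (a := 1 - Lc / D). set (b := Ls * Lc / D).
  assert (Ha1 : a < 1) by (unfold a; assert (0 < Lc / D) by (apply Rdiv_lt_0_compat; lra); lra).
  assert (Ha0 : 0 < a) by (unfold a; assert (Lc / D < 1) by (apply Rlt_div_l; unfold D; nra); lra).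
  assert (Hs : 1 <= a + b).
  { unfold a, b. assert (0 <= (Ls - 1) * Lc / D) by (apply Rdiv_le_0_compat; nra).
    replace (1 - Lc / D + Ls * Lc / D) with (1 + (Ls - 1) * Lc / D) by (field; lra). lra. }
  assert (Hb1 : b < 1) by (unfold b; apply Rlt_div_l; unfold D; nra).
  split; [exact Ha0|].
  assert (HmL : min1 Ls = 1) by (unfold min1; rewrite Rmin_right; lra).
  assert (Hap : min1 a = a) by (unfold min1; rewrite Rmin_left; lra).
  set (V := (Ls * (2 * Lc + 1) - Lc - 1) / D).
  assert (E1 : exp_side_outage Ls a = V).
  { unfold exp_side_outage, V. rewrite Hap, Rmax_left by lra. unfold a, D in *. field. intro; nra. }
  assert (E2 : exp_chan_outage Ls Lc a b = V).
  { unfold exp_chan_outage, outage_exp, V. rewrite Hap, HmL, Rmax_left by lra.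
    unfold a, b, D in *. field. intro; nra. }
  assert (E3 : exp_success Ls a b = V).
  { unfold exp_success, V. rewrite HmL. unfold min1. rewrite Rmin_right by lra.
    unfold a, b, D in *. field. intro; nra. }
  unfold exponent. destruct (Rle_dec a 0); [lra|].
  rewrite E1, E2, E3, (Rmin_left V V), (Rmin_left V V) by lra. reflexivity.
Qed.

Lemma exponent_attains_Delta Ls Lc : 0 < Ls -> 0 < Lc ->
  exists a b, 0 <= a /\ 0 < b /\ exponent Ls Lc a b = Delta_formula Ls Lc.
Proof.
  intros HL HM. unfold Delta_formula. destruct (Rle_dec Ls 1) as [HL1|HL1].
  - exists 0, (Lc / (Lc + 1 - Ls)). repeat split; [lra | apply Rdiv_lt_0_compat; lra |].
    apply exponent_attains_Delta_small; auto.
  - assert (HD : 0 < Ls * (Lc + 1) - 1) by nra.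
    destruct (exponent_attains_Delta_large Ls Lc ltac:(lra) HM) as [Ha E].
    exists (1 - Lc / (Ls * (Lc + 1) - 1)), (Ls * Lc / (Ls * (Lc + 1) - 1)).
    repeat split; [lra | apply Rdiv_lt_0_compat; nra | exact E].
Qed.

Lemma lim_infty_unique f d1 d2 : lim_infty f d1 -> lim_infty f d2 -> d1 = d2.
Proof.
  intros H1 H2. destruct (Req_dec d1 d2) as [|Hne]; auto. exfalso.
  set (eps := Rabs (d1 - d2) / 2).
  assert (He : 0 < eps) by (unfold eps; assert (0 < Rabs (d1 - d2)) by (apply Rabs_pos_lt; lra); lra).
  destruct (H1 eps He) as (M1 & HM1). destruct (H2 eps He) as (M2 & HM2).
  set (x := Rmax M1 M2 + 1).
  specialize (HM1 x ltac:(unfold x; pose proof (Rmax_l M1 M2); lra)).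
  specialize (HM2 x ltac:(unfold x; pose proof (Rmax_r M1 M2); lra)).
  assert (Rabs (d1 - d2) < 2 * eps).
  { replace (d1 - d2) with (- (f x - d1) + (f x - d2)) by ring.
    eapply Rle_lt_trans; [apply Rabs_triang|]. rewrite Rabs_Ropp. lra. }
  unfold eps in *. lra.
Qed.

(* If c rho^(-d) <= f rho <= C (1 + ln rho) rho^(-d) for large rho, then
   -ln f(rho) / ln rho = d + O(ln ln rho / ln rho) -> d. *)
Lemma lim_exponent_squeeze (f : R -> R) d cL CU : 0 < cL -> 0 < CU ->
  for_large_rho (fun rho => cL * Rpower rho (- d) <= f rho
                            /\ f rho <= CU * (1 + ln rho) * Rpower rho (- d)) ->
  lim_infty (fun rho => - ln (f rho) / ln rho) d.
Proof.
  intros HcL HCU (r0 & Hr0 & Hb) eps Heps.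
  set (m := 4 / eps). assert (Hm : 0 < m) by (unfold m; apply Rdiv_lt_0_compat; lra).
  set (K := Rabs (ln cL) + Rabs (ln CU) + Rabs (ln m) + 1).
  pose proof (Rabs_pos (ln cL)). pose proof (Rabs_pos (ln CU)). pose proof (Rabs_pos (ln m)).
  pose proof (Rle_abs (ln cL)). pose proof (Rle_abs (- ln cL)). rewrite Rabs_Ropp in *.
  pose proof (Rle_abs (ln CU)). pose proof (Rle_abs (- ln CU)). rewrite Rabs_Ropp in *.
  pose proof (Rle_abs (ln m)).
  exists (Rmax r0 (exp (2 * K / eps + 1))). intros rho Hrho.
  pose proof (Rmax_l r0 (exp (2 * K / eps + 1))). pose proof (Rmax_r r0 (exp (2 * K / eps + 1))).
  assert (Hl : 2 * K / eps + 1 < ln rho).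
  { rewrite <- (ln_exp (2 * K / eps + 1)). apply ln_increasing; [apply exp_pos | lra]. }
  assert (H2K : 0 < 2 * K / eps) by (apply Rdiv_lt_0_compat; unfold K; lra).
  destruct (Hb rho ltac:(lra)) as [B1 B2].
  set (l := ln rho) in *.
  assert (HKl : K < eps * l / 2).
  { apply (Rmult_lt_reg_r (2 / eps)); [apply Rdiv_lt_0_compat; lra|].
    replace (eps * l / 2 * (2 / eps)) with l by (field; lra).
    replace (K * (2 / eps)) with (2 * K / eps) by (field; lra). lra. }
  pose proof (Rpower_pos rho (- d)) as HE.
  assert (Hf : 0 < f rho) by nra.
  assert (L1 : ln cL - d * l <= ln (f rho)).
  { apply ln_le in B1; [|nra]. rewrite ln_mult, ln_Rpower in B1 by (auto; apply Rpower_pos). fold l in B1. lra. }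
  assert (L2 : ln (f rho) <= ln CU + ln (1 + l) - d * l).
  { apply ln_le in B2; auto.
    rewrite ln_mult, ln_mult, ln_Rpower in B2 by (try apply Rpower_pos; try apply Rmult_lt_0_compat; lra).
    fold l in B2. lra. }
  assert (L3 : ln (1 + l) <= eps * l / 2 + Rabs (ln m)).
  { pose proof (ln_le_scaled (1 + l) m ltac:(lra) Hm).
    assert ((1 + l) / m <= eps * l / 2)
      by (unfold m; replace ((1 + l) / (4 / eps)) with (eps * (1 + l) / 4) by (field; lra); nra).
    lra. }
  assert (X : l * (- ln (f rho) / l - d) = - ln (f rho) - d * l) by (field; lra).
  assert (- eps * l < l * (- ln (f rho) / l - d) < eps * l) by (rewrite X; unfold K in HKl; split; lra).
  apply Rabs_def1; apply (Rmult_lt_reg_l l); lra.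
Qed.

Lemma exp_ratio_limit Ls Lc rs rc : 0 < Ls -> 0 < Lc -> 0 <= rs -> 0 < rc ->
  lim_infty (exp_ratio Ls Lc rs rc) (exponent Ls Lc rs rc).
Proof.
  intros HLs HLc Hs Hc.
  destruct (ED_lower Ls Lc rs rc HLs HLc Hs Hc) as (cL & HcL & Hlow).
  destruct (ED_upper Ls Lc rs rc HLs HLc Hs Hc) as (CU & HCU & Hup).
  apply (lim_exponent_squeeze _ _ cL CU HcL HCU).
  apply (for_large_rho_mono _ _ (for_large_rho_and _ _ Hlow Hup)).
  intros rho Hr. rewrite EDs_reduced by (auto; lra). auto.
Qed.

Theorem lemma8 (Ls Lc : R) (hLs : 0 < Ls) (hLc : 0 < Lc) :
  (forall rs rc : R, 0 <= rs -> 0 < rc ->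
     exists d : R, lim_infty (exp_ratio Ls Lc rs rc) d) /\
  is_lub (fun d => exists rs rc : R, 0 <= rs /\ 0 < rc /\
                     lim_infty (exp_ratio Ls Lc rs rc) d)
         (Delta_formula Ls Lc).
Proof.
  split; [|split].
  - intros rs rc Hs Hc. exists (exponent Ls Lc rs rc). apply exp_ratio_limit; auto.
  - intros d (rs & rc & Hs & Hc & Hlim).
    rewrite (lim_infty_unique _ _ _ Hlim (exp_ratio_limit Ls Lc rs rc hLs hLc Hs Hc)).
    apply exponent_le_Delta; auto.
  - intros B HB. apply HB.
    destruct (exponent_attains_Delta Ls Lc hLs hLc) as (rs & rc & Hs & Hc & E).
    exists rs, rc. repeat split; auto. rewrite <- E. apply exp_ratio_limit; auto.
Qed.
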